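(* Let $\mathbb{A}=\{a_n\}_{n\in\mathbb{N}^+}$ be a set of integers $\ge2$, listed in increasing order, and let $\mathbb{A}'=\{a'_n\}_{n\in\mathbb{N}^+}\subset\mathbb{A}$ be a subset such that $\sum_{n=1}^{\infty}e^{-a'_n t}$ is majorized by $t^{-1/2}$ as $t\to0^+$. Let $\tilde{\mathbb{A}}=\mathbb{A}\setminus\mathbb{A}'=\{\tilde a_n\}_{n\in\mathbb{N}^+}$, listed in increasing order. If for some $i,j\in\mathbb{N}$ the Dirichlet series $$\mathcal{D}_{\{\tilde a_{2^i n+j}\}_{n\in\mathbb{N}^+}}(s)=\sum_{n=1}^{\infty}\tilde a_{2^in+j}^{-s}$$ admits a non-singular analytic continuation to some domain $\mathcal{U}\subset\mathbb{C}$, then (the continuation of) $\zeta_{\mathbb{A}}$ satisfies $\zeta_{\mathbb{A}}(s)\neq0$ for all $s\in\mathcal{U}\cap\{s:\Re(s)>1/2\}$.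
   Context: For a strictly increasing sequence $\mathbb{B}=\{b_n\}$ of positive integers, $\mathcal{D}_{\mathbb{B}}(s)=\sum_n b_n^{-s}$, and if $1\notin\mathbb{B}$, $\zeta_{\mathbb{B}}(s)=\prod_n \frac{1}{1-b_n^{-s}}$ (defined for $\Re(s)>1$ and by analytic continuation elsewhere). ''$\sum e^{-a'_nt}$ is majorized by $t^{-1/2}$ as $t\to0^+$'' means there is $C>0$ with $\sum_n e^{-a'_nt}\le Ct^{-1/2}$ for all sufficiently small $t>0$. *)

From Stdlib Require Import Reals.
From Coquelicot Require Import Coquelicot.
Open Scope R_scope.

(* Sequences are indexed by N^+ : b : nat -> nat, only values b n with n >= 1 matter. *)
Definition strictly_increasing_pos (b : nat -> nat) : Prop :=
  forall n : nat, (1 <= n)%nat -> (b n < b (S n))%nat.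

Definition in_seq (b : nat -> nat) (x : nat) : Prop :=
  exists n : nat, (1 <= n)%nat /\ b n = x.

(* complex power  b^{-s} = exp(-s log b)  for a positive integer b *)
Definition cpow_neg (b : nat) (s : C) : C :=
  (exp (- Re s * ln (INR b)) * cos (Im s * ln (INR b)),
   - (exp (- Re s * ln (INR b)) * sin (Im s * ln (INR b)))).

Fixpoint zeta_partial (b : nat -> nat) (s : C) (N : nat) : C :=
  match N with
  | O => RtoC 1
  | S N' => Cmult (zeta_partial b s N') (Cinv (Cminus (RtoC 1) (cpow_neg (b (S N')) s)))
  end.

(* zeta_B(s) = z, i.e. the infinite product defining zeta_B converges to z *)
Definition zeta_value (b : nat -> nat) (s : C) (z : C) : Prop :=
  filterlim (zeta_partial b s) eventually (locally z).

Definition holomorphic_on (U : C -> Prop) (f : C -> C) : Prop :=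
  forall z : C, U z -> ex_derive (K := C_AbsRing) (V := C_NormedModule) f z.

Definition connected_set (U : C -> Prop) : Prop :=
  forall V W : C -> Prop, open V -> open W ->
    (forall z, U z -> V z \/ W z) ->
    (forall z, U z -> V z -> W z -> False) ->
    (exists z, U z /\ V z) -> (exists z, U z /\ W z) -> False.

Definition is_domain (U : C -> Prop) : Prop :=
  open U /\ connected_set U /\ exists z, U z.

From Stdlib Require Import Reals Lra Lia Psatz ClassicalEpsilon.
From Coquelicot Require Import Coquelicot.
Open Scope R_scope.

(* For Re s > 1, log zeta_A(s) = sum_n -log(1 - a_n^{-s}) = D_A(s) + R(s), where the
   remainder R(s) = sum_n (-log(1 - a_n^{-s}) - a_n^{-s}) is dominated by sum_n a_n^{-2 Re s} and is
   therefore holomorphic on Re s > 1/2.  Since A is the disjoint union of A' and \tilde A,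
   D_A = D_{A'} + D_{\tilde A}.  The theta bound forces a'_n >> n^2, so D_{A'} is holomorphic on
   Re s > 1/2.  Splitting \tilde A into the Q = 2^i residue classes of indices shifted by j, each class
   differs from the class {\tilde a_{Qn+j}} by a sum of gaps c_n^{-s} - b_n^{-s} with interlaced
   b_n <= c_n <= b_{n+1}; such a sum telescopes and is holomorphic on Re s > 0.  Hence
   D_{\tilde A} = Q G + (a function holomorphic on Re s > 0) on U, so log zeta_A continues
   holomorphically to U /\ {Re s > 1/2}, and zeta_A = exp (log zeta_A) has no zeros there. *)

(** * Complex differentiability and the mean value inequality *)

Ltac cring := apply injective_projections; simpl; ring.

Lemma dot2_le_Cmod v1 v2 d1 d2 : v1*d1+v2*d2 <= sqrt(v1^2+v2^2) * sqrt(d1^2+d2^2).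
Proof.
  rewrite <- sqrt_mult by nra.
  destruct (Rle_or_lt (v1*d1+v2*d2) 0).
  - apply Rle_trans with 0; auto; apply sqrt_pos.
  - rewrite <- (sqrt_pow2 (v1*d1+v2*d2)) by lra. apply sqrt_le_1_alt.
    assert (0 <= (v1*d2-v2*d1)^2) by (apply pow2_ge_0). nra.
Qed.

(* The real mean value theorem applied to <v, p t> - |v| m t, with v = p b - p a. *)
Lemma mean_value_plane (p1 p2 m d1 d2 dm : R -> R) a b : a <= b ->
  (forall t, a <= t <= b -> derivable_pt_lim p1 t (d1 t) /\ derivable_pt_lim p2 t (d2 t)
     /\ derivable_pt_lim m t (dm t) /\ sqrt (d1 t ^2 + d2 t ^2) <= dm t) ->
  Cmod (p1 b - p1 a, p2 b - p2 a) <= m b - m a.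
Proof.
  intros Hab H.
  destruct (Req_dec a b) as [<-|Hne].
  { replace (p1 a - p1 a, p2 a - p2 a) with (RtoC 0).
    rewrite Cmod_0; lra. unfold RtoC; f_equal; ring. }
  assert (Hlt : a < b) by lra.
  set (v1 := p1 b - p1 a). set (v2 := p2 b - p2 a).
  set (nv := Cmod (v1, v2)).
  assert (Hm : 0 <= m b - m a).
  { destruct (MVT_cor2 m dm a b Hlt) as [c [Hc1 Hc2]].
    intros c Hc; apply H; lra.
    rewrite Hc1. destruct (H c ltac:(lra)) as [_ [_ [_ Hd]]].
    pose proof (sqrt_pos (d1 c ^2 + d2 c^2)). nra. }
  destruct (MVT_cor2 (fun t => v1 * p1 t + v2 * p2 t - nv * m t)
      (fun t => v1 * d1 t + v2 * d2 t - nv * dm t) a b Hlt) as [c [Hc1 Hc2]].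
  { intros c Hc. destruct (H c Hc) as [D1 [D2 [D3 _]]].
    apply derivable_pt_lim_minus. apply derivable_pt_lim_plus.
    apply derivable_pt_lim_scal; auto. apply derivable_pt_lim_scal; auto.
    apply derivable_pt_lim_scal; auto. }
  destruct (H c ltac:(lra)) as [_ [_ [_ Hd]]].
  pose proof (dot2_le_Cmod v1 v2 (d1 c) (d2 c)) as Hcs.
  assert (Hnv : nv = sqrt (v1^2+v2^2)) by reflexivity.
  assert (Hnv0 : 0 <= nv) by (rewrite Hnv; apply sqrt_pos).
  assert (Hneg : v1 * d1 c + v2 * d2 c - nv * dm c <= 0).
  { rewrite <- Hnv in Hcs. nra. }
  assert (Hsq : nv * nv = v1^2 + v2^2) by (rewrite Hnv; rewrite sqrt_sqrt; nra).
  assert (nv*nv - nv * (m b - m a) <= 0).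
  { rewrite Hsq. unfold v1, v2 in *. nra. }
  fold nv. destruct (Req_dec nv 0) as [E|E]. lra.
  apply Rmult_le_reg_l with nv. lra. nra.
Qed.

Definition is_cderive (f : C -> C) (z d : C) := forall eps, 0 < eps -> exists del, 0 < del /\
  forall y, Cmod (y - z) < del -> Cmod (f y - f z - d * (y - z)) <= eps * Cmod (y - z).

Lemma is_cderive_derive f z d :
  is_cderive f z d -> is_derive (K:=C_AbsRing) (V:=AbsRing_NormedModule C_AbsRing) f z d.
Proof.
  intros H. split; [apply is_linear_scal_l|].
  intros x' Hx'. apply (is_filter_lim_locally_unique (K:=C_AbsRing) (V:=AbsRing_NormedModule C_AbsRing)) in Hx'.
  subst x'. intros eps. destruct (H eps (cond_pos eps)) as [del [Hd H']].
  exists (mkposreal _ Hd). intros y Hy.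
  change (Cmod (f y - f z - (y - z) * d) <= eps * Cmod (y - z)).
  rewrite (Cmult_comm (y - z) d). exact (H' y Hy).
Qed.

Lemma derive_is_cderive f z d :
  is_derive (K:=C_AbsRing) (V:=AbsRing_NormedModule C_AbsRing) f z d -> is_cderive f z d.
Proof.
  intros [_ H] eps Heps. destruct (H z (fun P HP => HP) (mkposreal _ Heps)) as [r Hr].
  exists r. split; [apply cond_pos|]. intros y Hy. specialize (Hr y Hy).
  change (Cmod (f y - f z - (y - z) * d) <= eps * Cmod (y - z)) in Hr.
  rewrite (Cmult_comm (y - z) d) in Hr. exact Hr.
Qed.

Lemma is_derive_C_NormedModule f z d :
  is_derive (K:=C_AbsRing) (V:=AbsRing_NormedModule C_AbsRing) f z d <->
  is_derive (K:=C_AbsRing) (V:=C_NormedModule) f z d.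
Proof. split; intros [_ H]; (split; [apply is_linear_scal_l|exact H]). Qed.

Lemma im_le_Cmod (c : C) : Rabs (snd c) <= Cmod c.
Proof.
  unfold Cmod. rewrite <- sqrt_Rsqr_abs. apply sqrt_le_1_alt. unfold Rsqr.
  pose proof (pow2_ge_0 (fst c)). nra.
Qed.

Lemma Cmod_RtoC_mult (t : R) (w : C) : Cmod (RtoC t * w) = Rabs t * Cmod w.
Proof. rewrite Cmod_mult, Cmod_R. reflexivity. Qed.

Lemma is_cderive_line_proj (P : C -> R) f D z h t :
  (forall a b, P (Cminus a b) = P a - P b) ->
  (forall a, Rabs (P a) <= Cmod a) ->
  (forall (r : R) a, P (Cmult (RtoC r) a) = r * P a) ->
  is_cderive f (z + RtoC t * h)%C D ->
  derivable_pt_lim (fun u => P (f (z + RtoC u * h)%C)) t (P (Cmult D h)).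
Proof.
  intros Pm Pb Ps H eps Heps.
  set (K := Cmod h + 1).
  assert (HK : 0 < K) by (unfold K; pose proof (Cmod_ge_0 h); lra).
  destruct (H (eps / (2*K)) ltac:(apply Rdiv_lt_0_compat; lra)) as [del [Hdel H']].
  assert (Hd : 0 < del / K) by (apply Rdiv_lt_0_compat; lra).
  exists (mkposreal _ Hd). simpl. intros tau Htau Hlt.
  set (z0 := (z + RtoC t * h)%C).
  set (y := (z + RtoC (t + tau) * h)%C).
  assert (Hy : (y - z0 = RtoC tau * h)%C) by (unfold y, z0; cring).
  assert (Hm : Cmod (y - z0) = Rabs tau * Cmod h) by (rewrite Hy; apply Cmod_RtoC_mult).
  assert (Hh : Cmod h < K) by (unfold K; lra).
  assert (Htp : 0 < Rabs tau) by (apply Rabs_pos_lt; auto).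
  assert (Hlt2 : Cmod (y - z0) < del).
  { rewrite Hm. apply Rle_lt_trans with (Rabs tau * K).
    apply Rmult_le_compat_l; lra.
    apply Rmult_lt_reg_r with (/K). apply Rinv_0_lt_compat; lra.
    rewrite Rmult_assoc, Rinv_r by lra. lra. }
  specialize (H' y Hlt2).
  assert (E : P (f y) - P (f z0) - tau * P (D * h)%C = P (f y - f z0 - D * (y - z0))%C).
  { rewrite Hy. rewrite !Pm. replace (D * (RtoC tau * h))%C with (RtoC tau * (D * h))%C by cring.
    rewrite Ps. ring. }
  change (f (z + RtoC (t + tau) * h)%C) with (f y). change (f (z + RtoC t * h)%C) with (f z0).
  replace ((P (f y) - P (f z0)) / tau - P (D * h)%C) with
      ((P (f y) - P (f z0) - tau * P (D * h)%C) / tau) by (field; auto).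
  rewrite E. unfold Rdiv. rewrite Rabs_mult, Rabs_inv.
  apply Rle_lt_trans with (eps / (2 * K) * Cmod (y - z0) * / Rabs tau).
  apply Rmult_le_compat_r. left; apply Rinv_0_lt_compat; auto.
  eapply Rle_trans. apply Pb. auto.
  rewrite Hm. field_simplify; try lra.
  apply Rmult_lt_reg_r with (2*K). lra. field_simplify; try lra. nra.
Qed.

Lemma cmean_value_segment f D m dm z h a b : a <= b ->
  (forall u, a <= u <= b -> is_cderive f (z + RtoC u * h)%C (D u) /\ derivable_pt_lim m u (dm u)
      /\ Cmod (D u * h) <= dm u) ->
  Cmod (f (z + RtoC b * h)%C - f (z + RtoC a * h)%C) <= m b - m a.
Proof.
  intros Hab H.
  apply (mean_value_plane (fun u => fst (f (z + RtoC u * h)%C)) (fun u => snd (f (z + RtoC u * h)%C)) m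
     (fun u => fst (Cmult (D u) h)) (fun u => snd (Cmult (D u) h)) dm a b Hab).
  intros t Ht. destruct (H t Ht) as [H1 [H2 H3]]. repeat split; auto.
  - apply (is_cderive_line_proj (fun w => fst w)); [intros; simpl; ring | intros; apply re_le_Cmod |
      intros; simpl; ring | exact H1].
  - apply (is_cderive_line_proj (fun w => snd w)); [intros; simpl; ring | intros; apply im_le_Cmod |
      intros; simpl; ring | exact H1].
Qed.

Lemma cmean_value_ball f f' M z del y :
  (forall w, Cmod (w - z) < del -> is_cderive f w (f' w)) ->
  (forall w, Cmod (w - z) < del -> Cmod (f' w) <= M) ->
  Cmod (y - z) < del -> Cmod (f y - f z) <= M * Cmod (y - z).
Proof.
  intros Hd Hb Hy. set (h := (y - z)%C).
  pose proof (cmean_value_segment f (fun u => f' (z + RtoC u * h)%C) (fun u => M * Cmod h * u) (fun _ => M * Cmod h)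
    z h 0 1 ltac:(lra)) as H.
  assert (Hseg : forall u, 0 <= u <= 1 -> Cmod ((z + RtoC u * h) - z)%C < del).
  { intros u Hu. replace ((z + RtoC u * h) - z)%C with (RtoC u * h)%C by cring.
    rewrite Cmod_RtoC_mult. rewrite Rabs_pos_eq by lra. fold h in Hy.
    pose proof (Cmod_ge_0 h). nra. }
  match type of H with ?A -> _ => assert A as HA end.
  { intros u Hu. repeat split.
    - apply Hd. apply Hseg; auto.
    - apply is_derive_Reals. auto_derive; auto. ring.
    - rewrite Cmod_mult. apply Rmult_le_compat_r. apply Cmod_ge_0. apply Hb. apply Hseg; auto. }
  specialize (H HA). cbv beta in H.
  replace (z + RtoC 1 * h)%C with y in H by (unfold h; cring).
  replace (z + RtoC 0 * h)%C with z in H by (unfold h; cring). lra.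
Qed.

Lemma is_cderive_ext f g z d : (forall w, f w = g w) -> is_cderive f z d -> is_cderive g z d.
Proof.
  intros E H eps Heps. destruct (H eps Heps) as [del [Hd H']]. exists del; split; auto.
  intros y Hy. rewrite <- !E. auto.
Qed.

Lemma is_cderive_eq_deriv f z d d' : d = d' -> is_cderive f z d -> is_cderive f z d'.
Proof. intros ->; auto. Qed.

Lemma is_cderive_plus f g z df dg : is_cderive f z df -> is_cderive g z dg -> is_cderive (fun w => f w + g w)%C z (df + dg)%C.
Proof.
  intros Hf Hg. apply derive_is_cderive. apply is_cderive_derive in Hf. apply is_cderive_derive in Hg.
  exact (is_derive_plus (K:=C_AbsRing) (V:=AbsRing_NormedModule C_AbsRing) f g z df dg Hf Hg).
Qed.

Lemma is_cderive_const c z : is_cderive (fun _ => c) z (RtoC 0).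
Proof. apply derive_is_cderive. exact (is_derive_const (K:=C_AbsRing) (V:=AbsRing_NormedModule C_AbsRing) c z). Qed.

Lemma is_cderive_id z : is_cderive (fun w => w) z (RtoC 1).
Proof. apply derive_is_cderive. exact (is_derive_id (K:=C_AbsRing) z). Qed.

Lemma is_cderive_mult f g z df dg : is_cderive f z df -> is_cderive g z dg ->
  is_cderive (fun w => f w * g w)%C z (df * g z + f z * dg)%C.
Proof.
  intros Hf Hg. apply derive_is_cderive. apply is_cderive_derive in Hf. apply is_cderive_derive in Hg.
  exact (is_derive_mult (K:=C_AbsRing) f g z df dg Hf Hg Cmult_comm).
Qed.

Lemma is_cderive_comp f g z df dg : is_cderive f (g z) df -> is_cderive g z dg -> is_cderive (fun w => f (g w)) z (dg * df)%C.
Proof.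
  intros Hf Hg. apply derive_is_cderive. apply is_cderive_derive in Hf. apply is_cderive_derive in Hg.
  exact (is_derive_comp (K:=C_AbsRing) (V:=AbsRing_NormedModule C_AbsRing) f g z df dg Hf Hg).
Qed.

Lemma is_cderive_scal c f z df : is_cderive f z df -> is_cderive (fun w => c * f w)%C z (c * df)%C.
Proof.
  intros H. eapply is_cderive_eq_deriv; [|apply is_cderive_mult; [apply is_cderive_const|exact H]]. cring.
Qed.

Lemma is_cderive_opp f z df : is_cderive f z df -> is_cderive (fun w => - f w)%C z (- df)%C.
Proof.
  intros H. eapply is_cderive_ext; [|eapply is_cderive_eq_deriv; [|apply (is_cderive_scal (RtoC (-1))); exact H]].
  intros; cring. cring.
Qed.

Lemma is_cderive_minus f g z df dg : is_cderive f z df -> is_cderive g z dg -> is_cderive (fun w => f w - g w)%C z (df - dg)%C.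
Proof. intros Hf Hg. apply (is_cderive_plus f (fun w => - g w)%C); auto. apply is_cderive_opp; auto. Qed.

Lemma is_cderive_sum_n (F : nat -> C -> C) (F' : nat -> C) z N :
  (forall k, (k <= N)%nat -> is_cderive (F k) z (F' k)) ->
  is_cderive (fun w => sum_n (fun k => F k w) N) z (sum_n F' N).
Proof.
  induction N; intros H.
  - eapply is_cderive_ext; [|rewrite sum_O; apply (H 0%nat); lia]. intros; rewrite sum_O; auto.
  - apply (is_cderive_ext (fun w => Cplus (sum_n (fun k => F k w) N) (F (S N) w))).
    intros w. rewrite sum_Sn. reflexivity.
    rewrite sum_Sn. apply (is_cderive_plus (fun w => sum_n (fun k => F k w) N) (F (S N))).
    apply IHN; intros; apply H; lia. apply H; lia.
Qed.

Lemma is_cderive_continuous f z d : is_cderive f z d -> forall eps, 0 < eps -> exists del, 0 < del /\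
  forall y, Cmod (y - z) < del -> Cmod (f y - f z) < eps.
Proof.
  intros H eps He. destruct (H 1 ltac:(lra)) as [d1 [Hd1 H1]].
  set (K := Cmod d + 2). assert (HK : 0 < K) by (unfold K; pose proof (Cmod_ge_0 d); lra).
  exists (Rmin d1 (eps / K)). split. apply Rmin_glb_lt; auto. apply Rdiv_lt_0_compat; auto.
  intros y Hy. pose proof (Rmin_l d1 (eps / K)). pose proof (Rmin_r d1 (eps / K)).
  specialize (H1 y ltac:(lra)).
  assert (E : (f y - f z)%C = ((f y - f z - d * (y - z)) + d * (y - z))%C) by cring.
  rewrite E. eapply Rle_lt_trans. apply Cmod_triangle. rewrite Cmod_mult.
  assert (Cmod (y - z) < eps / K) by lra. pose proof (Cmod_ge_0 (y - z)). pose proof (Cmod_ge_0 d).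
  assert (Cmod (y - z) * K < eps).
  { apply Rmult_lt_compat_r with (r := K) in H3; auto. unfold Rdiv in H3.
    rewrite Rmult_assoc, Rinv_l, Rmult_1_r in H3 by lra. auto. }
  unfold K in H6. nra.
Qed.

Definition cexp (z : C) : C := (exp (fst z) * cos (snd z), exp (fst z) * sin (snd z)).

Lemma exp_le x y : x <= y -> exp x <= exp y.
Proof. intros [H|H]. left; apply exp_increasing; auto. subst; lra. Qed.

Lemma cexp_plus u v : cexp (u + v)%C = (cexp u * cexp v)%C.
Proof.
  unfold cexp. destruct u as [a b], v as [c d]; cbn [fst snd Cplus].
  rewrite exp_plus, cos_plus, sin_plus. apply injective_projections; simpl; ring.
Qed.

Lemma Cmod_cexp z : Cmod (cexp z) = exp (fst z).
Proof.
  unfold cexp, Cmod; cbn [fst snd].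
  replace ((exp (fst z) * cos (snd z)) ^ 2 + (exp (fst z) * sin (snd z)) ^ 2)
    with (exp (fst z) ^ 2) by (pose proof (sin2_cos2 (snd z)); unfold Rsqr in *; nra).
  apply sqrt_pow2. left; apply exp_pos.
Qed.

Lemma cexp_neq0 z : cexp z <> RtoC 0.
Proof.
  intros H. pose proof (Cmod_cexp z). rewrite H, Cmod_0 in H0.
  pose proof (exp_pos (fst z)). lra.
Qed.

Lemma cexp_0 : cexp (RtoC 0) = RtoC 1.
Proof. unfold cexp; simpl. rewrite exp_0, cos_0, sin_0. apply injective_projections; simpl; ring. Qed.

Lemma cexp_line_der (x y u : R) :
  derivable_pt_lim (fun u => exp (u*x) * cos (u*y)) u (fst ((x,y) * cexp (RtoC u * (x,y))))%C /\
  derivable_pt_lim (fun u => exp (u*x) * sin (u*y)) u (snd ((x,y) * cexp (RtoC u * (x,y))))%C.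
Proof.
  unfold cexp. cbn. split; apply is_derive_Reals; auto_derive; auto; rewrite ?Rmult_0_l, ?Rmult_0_r, ?Rplus_0_r, ?Rminus_0_r; ring_simplify; reflexivity.
Qed.

Lemma cexp_line_val (x y u : R) :
  cexp (RtoC u * (x,y))%C = (exp (u*x) * cos (u*y), exp (u*x) * sin (u*y)).
Proof. unfold cexp. cbn. f_equal; f_equal; f_equal; ring. Qed.

Lemma exp_ux_le (x y u : R) : 0 <= u <= 1 -> exp (u * x) <= exp (Cmod (x,y)).
Proof.
  intros Hu. apply exp_le. pose proof (Cmod_ge_0 (x,y)).
  pose proof (re_le_Cmod (x,y)) as Hr. cbn in Hr. unfold Rabs in Hr.
  destruct (Rcase_abs x); nra.
Qed.

Lemma cexp_bound1 (h : C) (t : R) : 0 <= t <= 1 ->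
  Cmod (cexp (RtoC t * h)%C - RtoC 1) <= t * (Cmod h * exp (Cmod h)).
Proof.
  intros Ht. destruct h as [x y].
  pose proof (mean_value_plane (fun u => exp (u*x) * cos (u*y)) (fun u => exp (u*x) * sin (u*y))
    (fun u => u * (Cmod (x,y) * exp (Cmod (x,y))))
    (fun u => fst ((x,y) * cexp (RtoC u * (x,y))))%C
    (fun u => snd ((x,y) * cexp (RtoC u * (x,y))))%C
    (fun u => Cmod (x,y) * exp (Cmod (x,y))) 0 t ltac:(lra)) as H.
  match type of H with ?A -> _ => assert A as HA end.
  { intros u Hu. destruct (cexp_line_der x y u) as [D1 D2]. repeat split; auto.
    - apply is_derive_Reals. auto_derive; auto. ring.
    - change (Cmod ((x,y) * cexp (RtoC u * (x,y)))%C <= Cmod (x, y) * exp (Cmod (x, y))).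
      rewrite Cmod_mult, Cmod_cexp. apply Rmult_le_compat_l. apply Cmod_ge_0.
      cbn [fst]. replace (fst (RtoC u * (x,y))%C) with (u * x) by (cbn; ring).
      apply exp_ux_le; lra. }
  specialize (H HA). cbv beta in H.
  rewrite !Rmult_0_l, exp_0, cos_0, sin_0, Rminus_0_r in H.
  unfold cexp. cbn [fst snd Cmult RtoC].
  replace (t * x - 0 * y) with (t * x) by ring. replace (t * y + 0 * x) with (t * y) by ring.
  replace (Cminus (exp (t * x) * cos (t * y), exp (t * x) * sin (t * y)) (RtoC 1)) with
    (exp (t * x) * cos (t * y) - 1 * 1, exp (t * x) * sin (t * y) - 1 * 0)
    by (apply injective_projections; cbn; ring).
  exact H.
Qed.

Lemma cexp_bound2 (h : C) : Cmod (cexp h - RtoC 1 - h) <= Cmod h ^ 2 * exp (Cmod h) / 2.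
Proof.
  destruct h as [x y]. set (K := Cmod (x,y)).
  pose proof (mean_value_plane (fun u => exp (u*x) * cos (u*y) - 1 - u * x)
    (fun u => exp (u*x) * sin (u*y) - u * y)
    (fun u => u^2 / 2 * (K ^ 2 * exp K))
    (fun u => fst ((x,y) * (cexp (RtoC u * (x,y)) - RtoC 1)))%C
    (fun u => snd ((x,y) * (cexp (RtoC u * (x,y)) - RtoC 1)))%C
    (fun u => u * (K ^ 2 * exp K)) 0 1 ltac:(lra)) as H.
  match type of H with ?A -> _ => assert A as HA end.
  { intros u Hu. repeat split.
    - apply is_derive_Reals. cbv beta. rewrite cexp_line_val. cbn. auto_derive; auto. ring.
    - apply is_derive_Reals. cbv beta. rewrite cexp_line_val. cbn. auto_derive; auto. ring.
    - apply is_derive_Reals. auto_derive; auto. field.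
    - change (Cmod ((x,y) * (cexp (RtoC u * (x,y)) - RtoC 1))%C <= u * (K ^ 2 * exp K)).
      rewrite Cmod_mult. pose proof (cexp_bound1 (x,y) u Hu). fold K in H.
      pose proof (Cmod_ge_0 (x,y)). fold K in H0.
      replace (u * (K^2 * exp K)) with (K * (u * (K * exp K))) by ring.
      apply Rmult_le_compat_l; auto. }
  specialize (H HA). cbv beta in H. rewrite !Rmult_0_l, exp_0, cos_0, sin_0 in H.
  replace (Cminus (Cminus (cexp (x,y)) (RtoC 1)) (x,y)) with
    (exp (1 * x) * cos (1 * y) - 1 - 1 * x - (1 * 1 - 1 - 0),
     exp (1 * x) * sin (1 * y) - 1 * y - (1 * 0 - 0))
    by (unfold cexp; apply injective_projections; cbn; rewrite !Rmult_1_l; ring).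
  eapply Rle_trans. exact H. fold K. lra.
Qed.

Lemma is_cderive_cexp z : is_cderive cexp z (cexp z).
Proof.
  intros eps Heps.
  set (E := exp (fst z)).
  assert (HE : 0 < E) by apply exp_pos.
  exists (Rmin 1 (eps / (E * exp 1))). split.
  { apply Rmin_glb_lt. lra. apply Rdiv_lt_0_compat; auto. pose proof (exp_pos 1); nra. }
  intros y Hy. set (h := (y - z)%C).
  assert (Ey : y = (z + h)%C) by (unfold h; cring).
  rewrite Ey, cexp_plus.
  replace (cexp z * cexp h - cexp z - cexp z * h)%C with (cexp z * (cexp h - RtoC 1 - h))%C by cring.
  rewrite Cmod_mult, Cmod_cexp. fold E.
  pose proof (cexp_bound2 h) as B.
  fold h in Hy. pose proof (Rmin_l 1 (eps / (E * exp 1))). pose proof (Rmin_r 1 (eps / (E * exp 1))).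
  assert (Hh : 0 <= Cmod h) by apply Cmod_ge_0.
  assert (Hex : exp (Cmod h) <= exp 1) by (apply exp_le; lra).
  assert (He1 : 0 < exp 1) by apply exp_pos.
  assert (Hc : Cmod h * (E * exp 1) <= eps).
  { assert (Cmod h <= eps / (E * exp 1)) by lra.
    apply Rmult_le_compat_r with (r := E * exp 1) in H1; [|nra].
    unfold Rdiv in H1. rewrite Rmult_assoc, Rinv_l, Rmult_1_r in H1 by nra. lra. }
  apply Rle_trans with (E * (Cmod h ^ 2 * exp (Cmod h) / 2)).
  apply Rmult_le_compat_l; lra.
  assert (0 <= exp (Cmod h)) by (left; apply exp_pos).
  apply Rle_trans with (Cmod h * (Cmod h * (E * exp 1)) / 2).
  { assert (0 <= Cmod h * Cmod h) by nra.
    assert (Cmod h * Cmod h * exp (Cmod h) <= Cmod h * Cmod h * exp 1)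
      by (apply Rmult_le_compat_l; auto).
    replace (Cmod h ^ 2) with (Cmod h * Cmod h) by ring. nra. }
  assert (Cmod h * (Cmod h * (E * exp 1)) <= Cmod h * eps) by (apply Rmult_le_compat_l; auto).
  nra.
Qed.

Lemma is_cderive_cexp_comp g z dg : is_cderive g z dg -> is_cderive (fun w => cexp (g w)) z (dg * cexp (g z))%C.
Proof. intros H. apply is_cderive_comp; auto. apply is_cderive_cexp. Qed.

Definition CSeries (a : nat -> C) : C := (Series (fun n => fst (a n)), Series (fun n => snd (a n))).

Lemma sum_n_fst (a : nat -> C) N : fst (sum_n a N) = sum_n (fun n => fst (a n)) N.
Proof. induction N. rewrite !sum_O; auto. rewrite !sum_Sn. cbn -[sum_n]. rewrite <- IHN. reflexivity. Qed.

Lemma sum_n_snd (a : nat -> C) N : snd (sum_n a N) = sum_n (fun n => snd (a n)) N.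
Proof. induction N. rewrite !sum_O; auto. rewrite !sum_Sn. cbn -[sum_n]. rewrite <- IHN. reflexivity. Qed.

Lemma is_series_C_eps (a : nat -> C) l : is_series a l -> forall eps : posreal,
  exists N, forall n, (N <= n)%nat -> Cmod (sum_n a n - l) < eps.
Proof.
  intros H eps. destruct (proj1 (filterlim_locally_ball_norm (K:=C_AbsRing) (U:=C_NormedModule) (F:=eventually)
    (sum_n a) l) H eps) as [N HN]. exists N. intros n Hn. exact (HN n Hn).
Qed.

Lemma eps_is_series_C (a : nat -> C) l : (forall eps : posreal,
  exists N, forall n, (N <= n)%nat -> Cmod (sum_n a n - l) < eps) -> is_series a l.
Proof.
  intros H. apply (proj2 (filterlim_locally_ball_norm (K:=C_AbsRing) (U:=C_NormedModule) (F:=eventually)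
    (sum_n a) l)). intros eps. destruct (H eps) as [N HN]. exists N. exact HN.
Qed.

Lemma is_series_R_eps (a : nat -> R) l : is_series a l -> forall eps : posreal,
  exists N, forall n, (N <= n)%nat -> Rabs (sum_n a n - l) < eps.
Proof.
  intros H eps. destruct (proj1 (filterlim_locally_ball_norm (K:=R_AbsRing) (U:=R_NormedModule) (F:=eventually)
    (sum_n a) l) H eps) as [N HN]. exists N. intros n Hn. exact (HN n Hn).
Qed.

Lemma eps_is_series_R (a : nat -> R) l : (forall eps : posreal,
  exists N, forall n, (N <= n)%nat -> Rabs (sum_n a n - l) < eps) -> is_series a l.
Proof.
  intros H. apply (proj2 (filterlim_locally_ball_norm (K:=R_AbsRing) (U:=R_NormedModule) (F:=eventually)
    (sum_n a) l)). intros eps. destruct (H eps) as [N HN]. exists N. exact HN.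
Qed.

Lemma is_series_C_fst (a : nat -> C) l : is_series a l -> is_series (fun n => fst (a n)) (fst l).
Proof.
  intros H. apply eps_is_series_R. intros eps. destruct (is_series_C_eps a l H eps) as [N HN].
  exists N. intros n Hn. rewrite <- sum_n_fst. eapply Rle_lt_trans; [|exact (HN n Hn)]. apply (re_le_Cmod (sum_n a n - l)%C).
Qed.

Lemma is_series_C_snd (a : nat -> C) l : is_series a l -> is_series (fun n => snd (a n)) (snd l).
Proof.
  intros H. apply eps_is_series_R. intros eps. destruct (is_series_C_eps a l H eps) as [N HN].
  exists N. intros n Hn. rewrite <- sum_n_snd. eapply Rle_lt_trans; [|exact (HN n Hn)]. apply (im_le_Cmod (sum_n a n - l)%C).
Qed.

Lemma CSeries_correct (a : nat -> C) : ex_series a -> is_series a (CSeries a).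
Proof.
  intros [l Hl]. replace (CSeries a) with l. auto.
  unfold CSeries. rewrite (is_series_unique _ _ (is_series_C_fst _ _ Hl)).
  rewrite (is_series_unique _ _ (is_series_C_snd _ _ Hl)). destruct l; auto.
Qed.

Lemma is_series_C_unique (a : nat -> C) l l' : is_series a l -> is_series a l' -> l = l'.
Proof.
  intros H1 H2. apply injective_projections.
  rewrite <- (is_series_unique _ _ (is_series_C_fst _ _ H1)). apply is_series_unique, is_series_C_fst; auto.
  rewrite <- (is_series_unique _ _ (is_series_C_snd _ _ H1)). apply is_series_unique, is_series_C_snd; auto.
Qed.

Lemma CSeries_unique (a : nat -> C) l : is_series a l -> CSeries a = l.
Proof. intros H. apply (is_series_C_unique a); auto. apply CSeries_correct. exists l; auto. Qed.

Lemma sum_n_Cmod (a : nat -> C) b N : (forall n, Cmod (a n) <= b n) -> Cmod (sum_n a N) <= sum_n b N.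
Proof.
  intros H. induction N.
  - rewrite !sum_O. auto.
  - rewrite !sum_Sn. eapply Rle_trans. apply Cmod_triangle. apply Rplus_le_compat; auto.
Qed.

Lemma is_series_Cmod_le (a : nat -> C) la (b : nat -> R) lb :
  is_series a la -> is_series b lb -> (forall n, Cmod (a n) <= b n) -> Cmod la <= lb.
Proof.
  intros Ha Hb H. apply le_epsilon. intros eps Heps.
  assert (He2 : 0 < eps / 2) by lra.
  destruct (is_series_C_eps _ _ Ha (mkposreal _ He2)) as [N1 H1].
  destruct (is_series_R_eps _ _ Hb (mkposreal _ He2)) as [N2 H2].
  specialize (H1 (max N1 N2) ltac:(lia)). specialize (H2 (max N1 N2) ltac:(lia)). simpl in H1, H2.
  pose proof (sum_n_Cmod a b (max N1 N2) H).
  assert (Cmod la <= Cmod (sum_n a (max N1 N2)) + Cmod (sum_n a (max N1 N2) - la)).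
  { replace la with (sum_n a (max N1 N2) - (sum_n a (max N1 N2) - la))%C at 1 by cring.
    eapply Rle_trans. apply Cmod_triangle. rewrite Cmod_opp. lra. }
  unfold Rabs in H2. destruct (Rcase_abs _); lra.
Qed.

Lemma Series_tail_le (M : nat -> R) : ex_series M -> forall eps, 0 < eps ->
  exists N, Series M - sum_n M N <= eps.
Proof.
  intros HM eps Heps. pose proof (Series_correct M HM) as H.
  destruct (is_series_R_eps _ _ H (mkposreal _ Heps)) as [N HN]. exists N. specialize (HN N ltac:(lia)).
  simpl in HN. unfold Rabs in HN. destruct (Rcase_abs _); lra.
Qed.

Lemma is_series_tail (a : nat -> C) l N :
  is_series a l -> is_series (fun k => a (S N + k)%nat) (l - sum_n a N)%C.
Proof.
  intros H. apply is_series_incr_n. lia. simpl.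
  match goal with |- is_series _ ?X => replace X with l end. exact H.
  apply injective_projections; cbn -[sum_n]; rewrite ?sum_n_fst, ?sum_n_snd; ring.
Qed.

Lemma is_series_tail_R (a : nat -> R) l N :
  is_series a l -> is_series (fun k => a (S N + k)%nat) (l - sum_n a N).
Proof.
  intros H. apply is_series_incr_n. lia. simpl.
  match goal with |- is_series _ ?X => replace X with l end. exact H.
  change (l = (l - sum_n a N) + sum_n a N). unfold Rminus. rewrite Rplus_assoc, Rplus_opp_l, Rplus_0_r. reflexivity.
Qed.

Lemma is_series_Cminus (a b : nat -> C) la lb : is_series a la -> is_series b lb ->
  is_series (fun n => a n - b n)%C (la - lb)%C.
Proof. intros H1 H2. exact (is_series_minus (K:=C_AbsRing) (V:=C_NormedModule) a b la lb H1 H2). Qed.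

Lemma is_series_Cplus (a b : nat -> C) la lb : is_series a la -> is_series b lb ->
  is_series (fun n => a n + b n)%C (la + lb)%C.
Proof. intros H1 H2. exact (is_series_plus (K:=C_AbsRing) (V:=C_NormedModule) a b la lb H1 H2). Qed.

Lemma is_series_Cscal (c : C) (a : nat -> C) la : is_series a la ->
  is_series (fun n => c * a n)%C (c * la)%C.
Proof. intros H1. exact (is_series_scal_l (K:=C_AbsRing) (V:=C_NormedModule) c a la H1). Qed.

Lemma is_series_Rscal (c : R) (a : nat -> R) la : is_series a la ->
  is_series (fun n => c * a n) (c * la).
Proof. intros H1. exact (is_series_scal_l (K:=R_AbsRing) (V:=R_NormedModule) c a la H1). Qed.

Lemma ex_series_R_le (a b : nat -> R) : (forall n, 0 <= a n <= b n) -> ex_series b -> ex_series a.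
Proof.
  intros H Hb. apply (ex_series_le (K:=R_AbsRing) (V:=R_CompleteNormedModule) a b); auto.
  intros n. change (Rabs (a n) <= b n). rewrite Rabs_pos_eq; apply H.
Qed.

Lemma ex_series_pos_bounded (a : nat -> R) B : (forall n, 0 <= a n) -> (forall N, sum_n a N <= B) ->
  ex_series a.
Proof.
  intros H0 HB. destruct (ex_finite_lim_seq_incr (sum_n a) B) as [l Hl].
  intros n. rewrite sum_Sn. specialize (H0 (S n)). change plus with Rplus. simpl. lra.
  auto. exists l. exact Hl.
Qed.

Lemma ex_series_telescope (t y : nat -> R) : (forall n, 0 <= t n <= y n - y (S n)) -> (forall n, 0 <= y n) ->
  ex_series t.
Proof.
  intros H Hy. apply ex_series_pos_bounded with (B := y O). intros n; apply H.
  assert (forall N, sum_n t N <= y O - y (S N)).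
  { induction N. rewrite sum_O. apply H. rewrite sum_Sn. change plus with Rplus. simpl.
    specialize (H (S N)). simpl in IHN. lra. }
  intros N. specialize (H0 N). specialize (Hy (S N)). lra.
Qed.

Fixpoint csum (n : nat) (F : nat -> C) : C :=
  match n with O => RtoC 0 | S n => (csum n F + F n)%C end.

Lemma csum_ext n F G : (forall k, (k < n)%nat -> F k = G k) -> csum n F = csum n G.
Proof. induction n; intros H; simpl; auto. rewrite IHn by (intros; apply H; lia). rewrite H by lia. auto. Qed.

Lemma csum_plus n F G : csum n (fun k => F k + G k)%C = (csum n F + csum n G)%C.
Proof. induction n; simpl. cring. rewrite IHn. generalize (csum n F) (csum n G). intros; cring. Qed.

Lemma csum_const n c : csum n (fun _ => c) = (RtoC (INR n) * c)%C.
Proof. induction n; simpl csum. cring. rewrite IHn, S_INR. cring. Qed.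

Lemma csum_add K Q u : csum (K + Q) u = (csum K u + csum Q (fun r => u (K + r)%nat))%C.
Proof.
  induction Q; simpl. rewrite Nat.add_0_r. cring.
  rewrite Nat.add_succ_r. simpl. rewrite IHQ. generalize (csum K u) (csum Q (fun r => u (K + r)%nat)). intros; cring.
Qed.

Lemma sum_n_csum (u : nat -> C) K : sum_n u K = csum (S K) u.
Proof.
  induction K. rewrite sum_O. simpl. cring. rewrite sum_Sn, IHK. change plus with Cplus. reflexivity.
Qed.

Lemma is_series_csum Q (F : nat -> nat -> C) L :
  (forall r, (r < Q)%nat -> is_series (F r) (L r)) ->
  is_series (fun n => csum Q (fun r => F r n)) (csum Q L).
Proof.
  induction Q; intros H.
  - simpl. apply eps_is_series_C. intros eps. exists O. intros n _.
    rewrite sum_n_csum. rewrite csum_const.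
    replace (RtoC (INR (S n)) * RtoC 0 - RtoC 0)%C with (RtoC 0) by cring. rewrite Cmod_0. apply cond_pos.
  - simpl. apply is_series_Cplus. apply IHQ; intros; apply H; lia. apply H; lia.
Qed.

Section TermwiseDerivative.
Variables (f f' : nat -> C -> C) (M : nat -> R) (z : C) (del : R).
Hypothesis Hdel : 0 < del.
Hypothesis Hf : forall n y, Cmod (y - z) < del -> is_cderive (f n) y (f' n y).
Hypothesis Hf' : forall n y, Cmod (y - z) < del -> Cmod (f' n y) <= M n.
Hypothesis HM : ex_series M.
Hypothesis Hex : forall y, Cmod (y - z) < del -> ex_series (fun n => f n y).

Lemma CSeries_tail_increment_bound y N : Cmod (y - z) < del ->
  Cmod ((CSeries (fun n => f n y) - sum_n (fun n => f n y) N)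
        - (CSeries (fun n => f n z) - sum_n (fun n => f n z) N)
        - (y - z) * (CSeries (fun n => f' n z) - sum_n (fun n => f' n z) N))%C
  <= 2 * Cmod (y - z) * (Series M - sum_n M N).
Proof.
  intros Hy. set (h := (y - z)%C). fold h in Hy.
  assert (Hz : Cmod (z - z) < del) by (pose proof (Cmod_ge_0 h); replace (z - z)%C with (RtoC 0) by cring; rewrite Cmod_0; lra).
  assert (Ed : ex_series (fun n => f' n z)).
  { apply (ex_series_le (K:=C_AbsRing) (V:=C_CompleteNormedModule) _ M); [intros n; apply (Hf' n z Hz)|exact HM]. }
  pose proof (is_series_tail _ _ N (CSeries_correct _ (Hex y Hy))) as Ey.
  pose proof (is_series_tail _ _ N (CSeries_correct _ (Hex z Hz))) as Ez.
  pose proof (is_series_Cscal h _ _ (is_series_tail _ _ N (CSeries_correct _ Ed))) as Ed'.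
  assert (TR : is_series (fun k => 2 * Cmod h * M (S N + k)%nat) (2 * Cmod h * (Series M - sum_n M N))).
  { apply (is_series_Rscal (2 * Cmod h)). apply is_series_tail_R. apply Series_correct; auto. }
  apply (is_series_Cmod_le _ _ _ _ (is_series_Cminus _ _ _ _ (is_series_Cminus _ _ _ _ Ey Ez) Ed') TR).
  intros k. cbv beta.
  eapply Rle_trans; [apply Cmod_triangle|]. rewrite Cmod_opp, Cmod_mult.
  pose proof (cmean_value_ball (f (S N + k)%nat) (f' (S N + k)%nat) (M (S N + k)%nat) z del y
     (fun w Hw => Hf _ w Hw) (fun w Hw => Hf' _ w Hw) Hy).
  pose proof (Hf' (S N + k)%nat z Hz). fold h in H. pose proof (Cmod_ge_0 h). nra.
Qed.

Lemma is_cderive_CSeries :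
  is_cderive (fun y => CSeries (fun n => f n y)) z (CSeries (fun n => f' n z)).
Proof.
  intros eps Heps.
  destruct (Series_tail_le M HM (eps/4) ltac:(lra)) as [N HN].
  assert (HP : is_cderive (fun w => sum_n (fun k => f k w) N) z (sum_n (fun k => f' k z) N)).
  { apply (is_cderive_sum_n (fun k w => f k w) (fun k => f' k z)). intros; apply Hf.
    replace (z - z)%C with (RtoC 0) by cring. rewrite Cmod_0. auto. }
  destruct (HP (eps/2) ltac:(lra)) as [d1 [Hd1 HP']].
  exists (Rmin d1 del). split; [apply Rmin_glb_lt; auto|].
  intros y Hy. pose proof (Rmin_l d1 del). pose proof (Rmin_r d1 del).
  specialize (HP' y ltac:(lra)).
  pose proof (CSeries_tail_increment_bound y N ltac:(lra)) as HT.
  set (h := (y - z)%C) in *.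
  match goal with |- Cmod ?X <= _ => match type of HT with Cmod ?T <= _ =>
    replace X with ((sum_n (fun k => f k y) N - sum_n (fun k => f k z) N - sum_n (fun k => f' k z) N * h) + T)%C
      by cring end end.
  eapply Rle_trans; [apply Cmod_triangle|].
  pose proof (Cmod_ge_0 h). nra.
Qed.
End TermwiseDerivative.

Definition holo_on (O : C -> Prop) (f : C -> C) := forall s, O s -> exists d, is_cderive f s d.

Lemma holo_on_plus O f g : holo_on O f -> holo_on O g -> holo_on O (fun s => f s + g s)%C.
Proof. intros Hf Hg s Hs. destruct (Hf s Hs), (Hg s Hs). eexists; apply is_cderive_plus; eauto. Qed.

Lemma holo_on_scal O c f : holo_on O f -> holo_on O (fun s => c * f s)%C.
Proof. intros Hf s Hs. destruct (Hf s Hs). eexists; apply is_cderive_scal; eauto. Qed.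

Lemma holo_on_csum O n (F : nat -> C -> C) : (forall k, (k < n)%nat -> holo_on O (F k)) ->
  holo_on O (fun s => csum n (fun k => F k s)).
Proof.
  induction n; intros H.
  - intros s Hs. exists (RtoC 0). apply (is_cderive_const (RtoC 0)).
  - simpl. apply (holo_on_plus O (fun s => csum n (fun k => F k s)) (F n)).
    apply IHn; intros; apply H; lia. apply H; lia.
Qed.

Lemma holo_on_cexp O f : holo_on O f -> holo_on O (fun s => cexp (f s)).
Proof. intros Hf s Hs. destruct (Hf s Hs). eexists; apply is_cderive_cexp_comp; eauto. Qed.

Lemma holo_on_subset O O' f : (forall s, O' s -> O s) -> holo_on O f -> holo_on O' f.
Proof. intros H Hf s Hs. apply Hf, H, Hs. Qed.

Lemma holomorphic_on_holo_on O f : holo_on O f -> holomorphic_on O f.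
Proof. intros H z Hz. destruct (H z Hz) as [d Hd]. exists d. apply is_derive_C_NormedModule, is_cderive_derive, Hd. Qed.

Lemma holo_on_holomorphic_on O f : holomorphic_on O f -> holo_on O f.
Proof. intros H z Hz. destruct (H z Hz) as [d Hd]. exists d. apply derive_is_cderive, is_derive_C_NormedModule, Hd. Qed.

Lemma Re_ball_lower (y s : C) : fst s - Cmod (y - s) <= fst y.
Proof. pose proof (re_le_Cmod (y - s)%C). cbn in H. unfold Rabs in H. destruct (Rcase_abs _); lra. Qed.

Lemma Cmod_ball_upper (y s : C) : Cmod y <= Cmod s + Cmod (y - s).
Proof. pose proof (Cmod_triangle s (y - s)). replace (s + (y - s))%C with y in H by cring. lra. Qed.

Definition rpow_neg (s : R) (x : nat) : R := exp (- s * ln (INR x)).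

Lemma rpow_neg_pos s x : 0 < rpow_neg s x.
Proof. apply exp_pos. Qed.

Lemma ln_INR_ge0 (x : nat) : (1 <= x)%nat -> 0 <= ln (INR x).
Proof. intros H. rewrite <- ln_1. apply ln_le. lra. apply le_INR in H. simpl in H. lra. Qed.

Lemma ln_le_nat (b c : nat) : (1 <= b)%nat -> (b <= c)%nat -> ln (INR b) <= ln (INR c).
Proof. intros H1 H2. apply ln_le. apply lt_0_INR; lia. apply le_INR; auto. Qed.

Lemma rpow_neg_le_exponent s1 s x : (1 <= x)%nat -> s1 <= s -> rpow_neg s x <= rpow_neg s1 x.
Proof. intros Hx Hs. unfold rpow_neg. apply exp_le. pose proof (ln_INR_ge0 x Hx). nra. Qed.

Lemma rpow_neg_le_base s (x y : nat) : 0 <= s -> (1 <= x)%nat -> (x <= y)%nat -> rpow_neg s y <= rpow_neg s x.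
Proof.
  intros Hs Hx Hxy. unfold rpow_neg. apply exp_le.
  assert (ln (INR x) <= ln (INR y)).
  { apply ln_le. apply lt_0_INR; lia. apply le_INR; auto. }
  nra.
Qed.

Lemma rpow_neg_mult s1 s2 x : rpow_neg s1 x * rpow_neg s2 x = rpow_neg (s1 + s2) x.
Proof. unfold rpow_neg. rewrite <- exp_plus. f_equal. ring. Qed.

Lemma rpow_neg_lt_1 sg (b : nat) : (2 <= b)%nat -> 0 < sg -> rpow_neg sg b < 1.
Proof.
  intros Hb Hs. unfold rpow_neg. rewrite <- exp_0. apply exp_increasing.
  assert (0 < ln (INR b)). { rewrite <- ln_1. apply ln_increasing. lra. apply le_INR in Hb. simpl in Hb. lra. }
  nra.
Qed.

Lemma ln_rpow_neg_le s eps (x : nat) : 0 < eps -> (1 <= x)%nat ->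
  ln (INR x) * rpow_neg s x <= / eps * rpow_neg (s - eps) x.
Proof.
  intros He Hx. unfold rpow_neg. set (L := ln (INR x)).
  assert (HL : 0 <= L) by (apply ln_INR_ge0; auto).
  assert (H1 : eps * L <= exp (eps * L)).
  { pose proof (exp_ineq1_le (eps * L)). lra. }
  replace (exp (- (s - eps) * L)) with (exp (eps * L) * exp (- s * L)) by (rewrite <- exp_plus; f_equal; ring).
  pose proof (exp_pos (- s * L)).
  rewrite <- Rmult_assoc. apply Rmult_le_compat_r; [lra|].
  apply Rmult_le_reg_l with eps; auto.
  rewrite <- Rmult_assoc, Rinv_r, Rmult_1_l by lra. lra.
Qed.

Lemma rpow_neg_telescope p (n : nat) : 1 < p -> (1 <= n)%nat ->
  (p - 1) * rpow_neg p (S n) <= rpow_neg (p - 1) n - rpow_neg (p - 1) (S n).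
Proof.
  intros Hp Hn. unfold rpow_neg. rewrite S_INR.
  assert (Hn0 : 1 <= INR n) by (apply le_INR in Hn; simpl in Hn; lra).
  destruct (MVT_cor2 (fun u => exp (- (p - 1) * ln u)) (fun u => - (p-1) * exp (- p * ln u))
     (INR n) (INR n + 1) ltac:(lra)) as [c [Hc1 Hc2]].
  { intros c Hc. apply is_derive_Reals. auto_derive. lra.
    replace (- p * ln c) with (- (p - 1) * ln c + - ln c) by ring.
    rewrite exp_plus, exp_Ropp, exp_ln by lra. field. lra. }
  assert (exp (- p * ln (INR n + 1)) <= exp (- p * ln c)).
  { apply exp_le. assert (ln c <= ln (INR n + 1)) by (apply ln_le; lra). nra. }
  assert ((p-1) * exp (- p * ln (INR n + 1)) <= (p-1) * exp (- p * ln c)) by (apply Rmult_le_compat_l; lra).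
  replace (INR n + 1 - INR n) with 1 in Hc1 by ring. lra.
Qed.

Lemma ex_series_rpow_neg_S p : 1 < p -> ex_series (fun n => rpow_neg p (S n)).
Proof.
  intros Hp. apply ex_series_pos_bounded with (B := 1 + / (p - 1)).
  intros; left; apply rpow_neg_pos.
  assert (Hi : 0 < / (p - 1)) by (apply Rinv_0_lt_compat; lra).
  assert (H : forall N, sum_n (fun n => rpow_neg p (S n)) N <= 1 + (1 - rpow_neg (p - 1) (S N)) / (p - 1)).
  { induction N.
    - rewrite sum_O. unfold rpow_neg. simpl. rewrite ln_1, !Rmult_0_r, exp_0. unfold Rdiv. lra.
    - rewrite sum_Sn. change plus with Rplus. simpl plus.
      pose proof (rpow_neg_telescope p (S N) Hp ltac:(lia)).
      apply Rle_trans with (1 + (1 - rpow_neg (p - 1) (S N)) / (p - 1) + rpow_neg p (S (S N))).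
      simpl in IHN |- *. lra.
      unfold Rdiv. apply Rmult_le_compat_r with (r := / (p - 1)) in H; [|lra].
      rewrite Rmult_comm, <- Rmult_assoc, (Rmult_comm _ (p - 1)), Rinv_r, Rmult_1_l in H by lra.
      lra. }
  intros N. specialize (H N). pose proof (rpow_neg_pos (p - 1) (S N)).
  assert ((1 - rpow_neg (p - 1) (S N)) / (p - 1) <= / (p - 1)).
  { unfold Rdiv. rewrite <- (Rmult_1_l (/ (p - 1))) at 2. apply Rmult_le_compat_r; lra. }
  lra.
Qed.

Lemma ex_series_rpow_neg_linear (c : nat -> nat) : (forall n, (S n <= c n)%nat) ->
  forall p, 1 < p -> ex_series (fun n => rpow_neg p (c n)) /\ ex_series (fun n => ln (INR (c n)) * rpow_neg p (c n)).
Proof.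
  intros Hc p Hp.
  assert (A : forall q, 1 < q -> ex_series (fun n => rpow_neg q (c n))).
  { intros q Hq. apply (ex_series_R_le _ (fun n => rpow_neg q (S n))). intros n. split. left; apply rpow_neg_pos.
    specialize (Hc n). apply rpow_neg_le_base; [lra|lia|lia]. apply ex_series_rpow_neg_S; auto. }
  split; auto.
  apply (ex_series_R_le _ (fun n => / ((p - 1)/2) * rpow_neg (p - (p - 1)/2) (c n))).
  intros n. split. apply Rmult_le_pos. apply ln_INR_ge0. specialize (Hc n); lia. left; apply rpow_neg_pos.
  apply ln_rpow_neg_le. lra. specialize (Hc n); lia.
  apply (ex_series_scal (K:=R_AbsRing) (V:=R_NormedModule)). apply A. lra.
Qed.

Lemma ex_series_rpow_neg_quadratic (c : nat -> nat) (kap : R) N0 : 0 < kap -> (forall n, (1 <= c n)%nat) ->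
  (forall n, (N0 <= n)%nat -> kap * INR (S n) ^ 2 <= INR (c n)) ->
  forall sg, 1/2 < sg -> ex_series (fun n => rpow_neg sg (c n)) /\ ex_series (fun n => ln (INR (c n)) * rpow_neg sg (c n)).
Proof.
  intros Hk Hc1 Hc sg Hsg.
  assert (A : forall q, 1/2 < q -> ex_series (fun n => rpow_neg q (c n))).
  { intros q Hq. apply (ex_series_incr_n _ N0).
    apply (ex_series_R_le _ (fun n => exp (- q * ln kap) * rpow_neg (2 * q) (S (N0 + n)))).
    intros n. split. left; apply rpow_neg_pos.
    specialize (Hc (N0 + n)%nat ltac:(lia)).
    unfold rpow_neg. rewrite <- exp_plus. apply exp_le.
    assert (HS : 0 < INR (S (N0 + n))) by (apply lt_0_INR; lia).
    assert (ln (kap * INR (S (N0 + n)) ^ 2) <= ln (INR (c (N0 + n)%nat))).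
    { apply ln_le. apply Rmult_lt_0_compat; auto. apply pow_lt; auto. auto. }
    rewrite ln_mult, ln_pow in H by (auto; apply pow_lt; auto).
    replace (INR 2) with 2 in H by (simpl; ring).
    apply Rmult_le_compat_l with (r := q) in H; lra.
    apply (ex_series_scal (K:=R_AbsRing) (V:=R_NormedModule)).
    apply (ex_series_incr_n (fun n => rpow_neg (2 * q) (S n)) N0). apply ex_series_rpow_neg_S. lra. }
  split; auto.
  apply (ex_series_R_le _ (fun n => / ((sg - 1/2)/2) * rpow_neg (sg - (sg - 1/2)/2) (c n))).
  intros n. split. apply Rmult_le_pos. apply ln_INR_ge0. auto. left; apply rpow_neg_pos.
  apply ln_rpow_neg_le. lra. auto.
  apply (ex_series_scal (K:=R_AbsRing) (V:=R_NormedModule)). apply A. lra.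
Qed.

Lemma incr_add_le (b : nat -> nat) : strictly_increasing_pos b ->
  forall m n, (1 <= m)%nat -> (m <= n)%nat -> (b m + (n - m) <= b n)%nat.
Proof.
  intros Hb m n Hm Hmn. induction n.
  - lia.
  - destruct (Nat.eq_dec m (S n)). subst. lia.
    specialize (IHn ltac:(lia)). specialize (Hb n ltac:(lia)). lia.
Qed.

Lemma incr_lt_inv (b : nat -> nat) : strictly_increasing_pos b ->
  forall m n, (1 <= m)%nat -> (1 <= n)%nat -> (b m < b n)%nat -> (m < n)%nat.
Proof.
  intros Hb m n Hm Hn H. destruct (Nat.lt_ge_cases m n); auto.
  pose proof (incr_add_le b Hb n m Hn H0). lia.
Qed.

Lemma incr_ge_index (b : nat -> nat) : strictly_increasing_pos b -> (1 <= b 1)%nat ->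
  forall n, (1 <= n)%nat -> (n <= b n)%nat.
Proof. intros Hb H1 n Hn. pose proof (incr_add_le b Hb 1 n ltac:(lia) Hn). lia. Qed.

Lemma in_seq_ge_2 (a b : nat -> nat) : strictly_increasing_pos a -> (2 <= a 1)%nat ->
  (forall x, in_seq b x -> in_seq a x) -> forall k, (1 <= k)%nat -> (2 <= b k)%nat.
Proof.
  intros Ha Ha1 Hs k Hk. destruct (Hs (b k) (ex_intro _ k (conj Hk eq_refl))) as [m [Hm E]].
  rewrite <- E. pose proof (incr_add_le a Ha 1 m ltac:(lia) Hm). lia.
Qed.

(** * Dirichlet series *)

Lemma cpow_neg_cexp b s : cpow_neg b s = cexp (- s * RtoC (ln (INR b)))%C.
Proof.
  unfold cpow_neg, cexp. destruct s as [x y]. cbn.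
  replace (- x * ln (INR b) - - y * 0) with (- x * ln (INR b)) by ring.
  replace (- x * 0 + - y * ln (INR b)) with (- (y * ln (INR b))) by ring.
  rewrite cos_neg, sin_neg. f_equal. ring.
Qed.

Lemma Cmod_cpow_neg b s : Cmod (cpow_neg b s) = rpow_neg (fst s) b.
Proof.
  rewrite cpow_neg_cexp, Cmod_cexp. unfold rpow_neg. f_equal. destruct s; cbn. ring.
Qed.

Lemma is_cderive_cpow_neg b s : is_cderive (cpow_neg b) s (RtoC (- ln (INR b)) * cpow_neg b s)%C.
Proof.
  apply (is_cderive_ext (fun s => cexp (- s * RtoC (ln (INR b)))%C)). intros; rewrite cpow_neg_cexp; auto.
  eapply is_cderive_eq_deriv; [|apply is_cderive_cexp_comp].
  2:{ apply (is_cderive_ext (fun w => (RtoC (- ln (INR b)) * w)%C)). intros; cring.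
      apply is_cderive_scal. apply is_cderive_id. }
  rewrite cpow_neg_cexp. cring.
Qed.

Definition dirichlet (c : nat -> nat) (s : C) : C := CSeries (fun n => cpow_neg (c (S n)) s).

Lemma dirichlet_series_holo (c : nat -> nat) th : 0 <= th -> (forall n, (1 <= c n)%nat) ->
  (forall sg, th < sg -> ex_series (fun n => ln (INR (c n)) * rpow_neg sg (c n))) ->
  (forall sg, th < sg -> ex_series (fun n => rpow_neg sg (c n))) ->
  (forall s, th < fst s -> ex_series (fun n => cpow_neg (c n) s)) /\
  holo_on (fun s => th < fst s) (fun s => CSeries (fun n => cpow_neg (c n) s)).
Proof.
  intros Hth Hc Hl HE.
  assert (Hex : forall s, th < fst s -> ex_series (fun n => cpow_neg (c n) s)).
  { intros s Hs. apply (ex_series_le (K:=C_AbsRing) (V:=C_CompleteNormedModule) _ (fun n => rpow_neg (fst s) (c n))).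
    intros n. change (Cmod (cpow_neg (c n) s) <= rpow_neg (fst s) (c n)). rewrite Cmod_cpow_neg. lra.
    apply HE; auto. }
  split; auto.
  intros s Hs. set (del := (fst s - th) / 2).
  eexists. apply (is_cderive_CSeries _ (fun n s => RtoC (- ln (INR (c n))) * cpow_neg (c n) s)%C
    (fun n => ln (INR (c n)) * rpow_neg (fst s - del) (c n)) s del).
  - unfold del; lra.
  - intros n y Hy. apply is_cderive_cpow_neg.
  - intros n y Hy. rewrite Cmod_mult, Cmod_cpow_neg, Cmod_R. rewrite Rabs_Ropp, Rabs_pos_eq
      by (apply ln_INR_ge0; auto). apply Rmult_le_compat_l. apply ln_INR_ge0; auto.
    apply rpow_neg_le_exponent; auto. pose proof (Re_ball_lower y s). lra.
  - apply Hl. unfold del; lra.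
  - intros y Hy. apply Hex. pose proof (Re_ball_lower y s). unfold del in *; lra.
Qed.

Lemma fst_line (u : R) (s : C) : fst (RtoC 0 + RtoC u * (- s))%C = - fst s * u.
Proof. destruct s; cbn. ring. Qed.

(* c^{-s} - b^{-s} is the integral of -s e^{-u s} over [ln b, ln c]. *)
Lemma cpow_neg_diff_bound (b c : nat) s : (1 <= b)%nat -> (b <= c)%nat -> 0 < fst s ->
  Cmod (cpow_neg c s - cpow_neg b s) <= Cmod s / fst s * (rpow_neg (fst s) b - rpow_neg (fst s) c).
Proof.
  intros Hb Hbc Hs. set (sg := fst s) in *.
  pose proof (cmean_value_segment cexp (fun u => cexp (RtoC 0 + RtoC u * (- s)))%C
    (fun u => - (Cmod s / sg) * exp (- sg * u)) (fun u => Cmod s * exp (- sg * u))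
    (RtoC 0) (- s)%C (ln (INR b)) (ln (INR c)) (ln_le_nat b c Hb Hbc)) as H.
  match type of H with ?A -> _ => assert A as HA end.
  { intros u Hu. repeat split.
    - apply is_cderive_cexp.
    - apply is_derive_Reals. auto_derive. { auto. } field. lra.
    - rewrite Cmod_mult, Cmod_cexp, Cmod_opp, fst_line. fold sg. right.
      rewrite Rmult_comm; repeat f_equal; ring. }
  specialize (H HA). cbv beta in H.
  rewrite !cpow_neg_cexp.
  replace (- s * RtoC (ln (INR c)))%C with (RtoC 0 + RtoC (ln (INR c)) * (- s))%C by cring.
  replace (- s * RtoC (ln (INR b)))%C with (RtoC 0 + RtoC (ln (INR b)) * (- s))%C by cring.
  eapply Rle_trans. exact H. unfold rpow_neg. right.
  ring.
Qed.

Lemma exp_poly_bound u s2 R0 : 0 <= u -> 0 < s2 -> 0 <= R0 ->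
  exp (- (2 * s2) * u) * (1 + R0 * u) <= (1 + R0 / s2) * exp (- s2 * u).
Proof.
  intros Hu Hs HR.
  replace (exp (- (2 * s2) * u)) with (exp (- s2 * u) * exp (- s2 * u)) by (rewrite <- exp_plus; f_equal; ring).
  assert (E1 : exp (s2 * u) * exp (- s2 * u) = 1) by (rewrite <- exp_plus; replace (s2 * u + - s2 * u) with 0 by ring; apply exp_0).
  pose proof (exp_ineq1_le (s2 * u)). pose proof (exp_pos (- s2 * u)).
  assert (Hk : 1 + R0 * u <= (1 + R0 / s2) * exp (s2 * u)).
  { apply Rle_trans with ((1 + R0 / s2) * (1 + s2 * u)).
    assert (0 <= R0 / s2) by (apply Rdiv_le_0_compat; lra).
    replace ((1 + R0 / s2) * (1 + s2 * u)) with (1 + s2 * u + R0 / s2 + R0 * u) by (field; lra). nra.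
    apply Rmult_le_compat_l. assert (0 <= R0 / s2) by (apply Rdiv_le_0_compat; lra). lra. lra. }
  rewrite Rmult_assoc. rewrite (Rmult_comm (1 + R0 / s2)). apply Rmult_le_compat_l. lra.
  apply Rmult_le_reg_l with (exp (s2 * u)). apply exp_pos.
  rewrite <- Rmult_assoc, E1, Rmult_1_l. nra.
Qed.

Definition x_cexp_neg (s : C) (w : C) : C := (w * cexp (w * (- s)))%C.

Lemma is_cderive_x_cexp_neg s w : is_cderive (x_cexp_neg s) w (cexp (w * - s) + w * ((- s) * cexp (w * - s)))%C.
Proof.
  unfold x_cexp_neg. eapply is_cderive_eq_deriv; [|apply is_cderive_mult; [apply is_cderive_id|apply is_cderive_cexp_comp]].
  2:{ apply (is_cderive_ext (fun w => (- s) * w)%C). intros; cring. apply is_cderive_scal, is_cderive_id. }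
  cbv beta. generalize (cexp (w * - s)%C). intros e. cring.
Qed.

(* Likewise for the derivatives, via u e^{-u s}; the factor 1 + |s| u costs half of the exponent. *)
Lemma cpow_neg_deriv_diff_bound (b c : nat) s sg1 R0 : (1 <= b)%nat -> (b <= c)%nat -> 0 < sg1 -> sg1 <= fst s ->
  Cmod s <= R0 ->
  Cmod (RtoC (- ln (INR c)) * cpow_neg c s - RtoC (- ln (INR b)) * cpow_neg b s)%C <=
    (1 + R0 / (sg1/2)) / (sg1/2) * (rpow_neg (sg1/2) b - rpow_neg (sg1/2) c).
Proof.
  intros Hb Hbc Hs1 Hs HR. set (s2 := sg1 / 2). set (K := (1 + R0 / s2) / s2).
  assert (Hs2 : 0 < s2) by (unfold s2; lra).
  assert (HR0 : 0 <= R0) by (pose proof (Cmod_ge_0 s); lra).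
  pose proof (cmean_value_segment (x_cexp_neg s) (fun u => cexp (RtoC u * - s) + RtoC u * ((- s) * cexp (RtoC u * - s)))%C
    (fun u => - K * exp (- s2 * u)) (fun u => K * s2 * exp (- s2 * u))
    (RtoC 0) (RtoC 1) (ln (INR b)) (ln (INR c)) (ln_le_nat b c Hb Hbc)) as H.
  match type of H with ?A -> _ => assert A as HA end.
  { intros u Hu. assert (Hu0 : 0 <= u) by (pose proof (ln_INR_ge0 b Hb); lra). repeat split.
    - replace (RtoC 0 + RtoC u * RtoC 1)%C with (RtoC u) by cring. apply is_cderive_x_cexp_neg.
    - apply is_derive_Reals. auto_derive. { auto. } unfold K; field. lra.
    - replace ((cexp (RtoC u * - s) + RtoC u * (- s * cexp (RtoC u * - s))) * RtoC 1)%C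
        with (cexp (RtoC u * - s) * (RtoC 1 - RtoC u * s))%C by (generalize (cexp (RtoC u * - s)); intros; cring).
      rewrite Cmod_mult, Cmod_cexp.
      assert (F : fst (RtoC u * - s)%C = - fst s * u) by (destruct s; cbn; ring). rewrite F.
      assert (C1 : Cmod (RtoC 1 - RtoC u * s) <= 1 + R0 * u).
      { eapply Rle_trans. apply Cmod_triangle. rewrite Cmod_opp, Cmod_1, Cmod_mult, Cmod_R, Rabs_pos_eq by auto. nra. }
      assert (C2 : exp (- fst s * u) <= exp (- (2 * s2) * u)) by (apply exp_le; unfold s2; nra).
      pose proof (exp_poly_bound u s2 R0 Hu0 Hs2 HR0) as Hpb.
      replace (K * s2 * exp (- s2 * u)) with ((1 + R0 / s2) * exp (- s2 * u)) by (unfold K; field; lra).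
      eapply Rle_trans; [|exact Hpb]. apply Rmult_le_compat. left; apply exp_pos. apply Cmod_ge_0. auto. auto. }
  specialize (H HA). cbv beta in H.
  replace (RtoC 0 + RtoC (ln (INR c)) * RtoC 1)%C with (RtoC (ln (INR c))) in H by cring.
  replace (RtoC 0 + RtoC (ln (INR b)) * RtoC 1)%C with (RtoC (ln (INR b))) in H by cring.
  unfold x_cexp_neg in H. rewrite !cpow_neg_cexp.
  replace (RtoC (- ln (INR c)) * cexp (- s * RtoC (ln (INR c))) - RtoC (- ln (INR b)) * cexp (- s * RtoC (ln (INR b))))%C
    with (- (RtoC (ln (INR c)) * cexp (RtoC (ln (INR c)) * - s) - RtoC (ln (INR b)) * cexp (RtoC (ln (INR b)) * - s)))%C.
  2:{ replace (RtoC (ln (INR c)) * - s)%C with (- s * RtoC (ln (INR c)))%C by cring.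
      replace (RtoC (ln (INR b)) * - s)%C with (- s * RtoC (ln (INR b)))%C by cring.
      generalize (cexp (- s * RtoC (ln (INR c)))%C) (cexp (- s * RtoC (ln (INR b)))%C). intros; cring. }
  rewrite Cmod_opp. eapply Rle_trans. exact H. fold s2. fold K. unfold rpow_neg. right.
  ring.
Qed.

Section InterlacedGaps.
Variables b c : nat -> nat.
Hypothesis Hbc : forall n, (1 <= b n)%nat /\ (b n <= c n)%nat /\ (c n <= b (S n))%nat.

Definition gap_term n s := (cpow_neg (c n) s - cpow_neg (b n) s)%C.

Lemma ex_series_gap_rpow_neg sg : 0 < sg -> ex_series (fun n => rpow_neg sg (b n) - rpow_neg sg (c n)).
Proof.
  intros Hs. apply (ex_series_telescope _ (fun n => rpow_neg sg (b n))).
  - intros n. destruct (Hbc n) as [H1 [H2 H3]].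
    assert (rpow_neg sg (c n) <= rpow_neg sg (b n)) by (apply rpow_neg_le_base; auto; lra).
    assert (rpow_neg sg (b (S n)) <= rpow_neg sg (c n)) by (apply rpow_neg_le_base; auto; lia || lra).
    lra.
  - intros; left; apply rpow_neg_pos.
Qed.

(* The sum telescopes against b, so it converges, and is holomorphic, on all of Re s > 0. *)
Lemma gap_series_holo : (forall s, 0 < fst s -> ex_series (fun n => gap_term n s)) /\
  holo_on (fun s => 0 < fst s) (fun s => CSeries (fun n => gap_term n s)).
Proof.
  assert (PW : forall s, 0 < fst s -> ex_series (fun n => gap_term n s)).
  { intros s Hs. apply (ex_series_le (K:=C_AbsRing) (V:=C_CompleteNormedModule) _
      (fun n => Cmod s / fst s * (rpow_neg (fst s) (b n) - rpow_neg (fst s) (c n)))).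
    - intros n. destruct (Hbc n) as [H1 [H2 H3]]. apply cpow_neg_diff_bound; auto.
    - apply (ex_series_scal (K:=R_AbsRing) (V:=R_NormedModule)). apply ex_series_gap_rpow_neg; auto. }
  split; auto.
  intros s Hs. set (del := fst s / 2). set (sg1 := fst s - del). set (R0 := Cmod s + del).
  eexists. apply (is_cderive_CSeries gap_term
    (fun n y => RtoC (- ln (INR (c n))) * cpow_neg (c n) y - RtoC (- ln (INR (b n))) * cpow_neg (b n) y)%C
    (fun n => (1 + R0 / (sg1/2)) / (sg1/2) * (rpow_neg (sg1/2) (b n) - rpow_neg (sg1/2) (c n))) s del).
  - unfold del; lra.
  - intros n y Hy. unfold gap_term. apply is_cderive_minus; apply is_cderive_cpow_neg.
  - intros n y Hy. destruct (Hbc n) as [H1 [H2 H3]]. apply cpow_neg_deriv_diff_bound; auto.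
    + unfold sg1, del; lra.
    + pose proof (Re_ball_lower y s). unfold sg1; lra.
    + pose proof (Cmod_ball_upper y s). unfold R0; lra.
  - apply (ex_series_scal (K:=R_AbsRing) (V:=R_NormedModule)). apply ex_series_gap_rpow_neg. unfold sg1, del; lra.
  - intros y Hy. apply PW. pose proof (Re_ball_lower y s). unfold del in *; lra.
Qed.
End InterlacedGaps.

(** * The logarithm of the Euler product *)

Fixpoint cpown (w : C) (k : nat) : C := match k with O => RtoC 1 | S k => (w * cpown w k)%C end.

Lemma Cmod_cpown w k : Cmod (cpown w k) = Cmod w ^ k.
Proof. induction k; simpl. apply Cmod_1. rewrite Cmod_mult, IHk. ring. Qed.

Lemma is_cderive_cpown k w : is_cderive (fun w => cpown w (S k)) w (RtoC (INR (S k)) * cpown w k)%C.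
Proof.
  induction k.
  - simpl. eapply is_cderive_ext. intros y; symmetry; apply Cmult_1_r.
    eapply is_cderive_eq_deriv; [|apply is_cderive_id]. cring.
  - change (is_cderive (fun w => w * cpown w (S k))%C w (RtoC (INR (S (S k))) * cpown w (S k))%C).
    eapply is_cderive_eq_deriv; [|apply is_cderive_mult; [apply is_cderive_id|exact IHk]].
    change (cpown w (S k)) with (w * cpown w k)%C. rewrite !S_INR. cring.
Qed.

Lemma Cmod_sub_lower (a b : C) : Cmod a - Cmod b <= Cmod (a - b).
Proof.
  pose proof (Cmod_triangle (a - b) b). replace (a - b + b)%C with a in H by cring. lra.
Qed.

Lemma one_minus_neq0 w : Cmod w < 1 -> (RtoC 1 - w)%C <> RtoC 0.
Proof.
  intros H E. pose proof (Cmod_sub_lower (RtoC 1) w). rewrite E, Cmod_0, Cmod_1 in H0. lra.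
Qed.

Lemma Cmult_reg_r a b c : c <> RtoC 0 -> (a * c = b * c)%C -> a = b.
Proof.
  intros Hc H. rewrite <- (Cmult_1_r a), <- (Cmult_1_r b), <- (Cinv_r c Hc), !Cmult_assoc, H. reflexivity.
Qed.

Lemma cpown_geom_sum w N : (sum_n (cpown w) N * (RtoC 1 - w))%C = (RtoC 1 - cpown w (S N))%C.
Proof.
  induction N.
  - rewrite sum_O. simpl. cring.
  - rewrite sum_Sn. change plus with Cplus.
    change (cpown w (S (S N))) with (w * cpown w (S N))%C.
    revert IHN. generalize (sum_n (cpown w) N) (cpown w (S N)). intros a b H.
    replace ((a + b) * (RtoC 1 - w))%C with (a * (RtoC 1 - w) + b * (RtoC 1 - w))%C by cring.
    rewrite H. cring.
Qed.

Lemma is_series_cpown w : Cmod w < 1 -> is_series (cpown w) (/ (RtoC 1 - w))%C.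
Proof.
  intros Hw. apply eps_is_series_C. intros eps.
  assert (Hn := one_minus_neq0 w Hw).
  assert (Hd : 0 < Cmod (RtoC 1 - w)) by (apply Cmod_gt_0; auto).
  destruct (pow_lt_1_zero (Cmod w) ltac:(rewrite Rabs_pos_eq by apply Cmod_ge_0; auto)
     (eps * Cmod (RtoC 1 - w)) ltac:(destruct eps; simpl; nra)) as [N HN].
  exists N. intros n Hn'.
  assert (E : (sum_n (cpown w) n - / (RtoC 1 - w))%C = (- cpown w (S n) / (RtoC 1 - w))%C).
  { apply (Cmult_reg_r _ _ (RtoC 1 - w)); auto.
    unfold Cdiv. rewrite <- Cmult_assoc, Cinv_l by auto. rewrite Cmult_1_r.
    replace ((sum_n (cpown w) n - / (RtoC 1 - w)) * (RtoC 1 - w))%C with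
      (sum_n (cpown w) n * (RtoC 1 - w) - / (RtoC 1 - w) * (RtoC 1 - w))%C by cring.
    rewrite cpown_geom_sum, Cinv_l by auto. cring. }
  rewrite E. rewrite Cmod_div by auto. rewrite Cmod_opp, Cmod_cpown.
  specialize (HN (S n) ltac:(lia)). rewrite Rabs_pos_eq in HN by (apply pow_le, Cmod_ge_0).
  apply Rmult_lt_reg_r with (Cmod (RtoC 1 - w)); auto. unfold Rdiv.
  rewrite Rmult_assoc, Rinv_l, Rmult_1_r by lra. lra.
Qed.

Definition log1m_term (k : nat) (w : C) : C := (RtoC (/ INR (S k)) * cpown w (S k))%C.

(* [log1m w] is -log (1 - w). *)
Definition log1m (w : C) : C := CSeries (fun k => log1m_term k w).

Lemma Cmod_log1m_term k w : Cmod (log1m_term k w) <= Cmod w ^ (S k).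
Proof.
  unfold log1m_term. rewrite Cmod_mult, Cmod_R, Cmod_cpown.
  rewrite Rabs_pos_eq by (left; apply Rinv_0_lt_compat, lt_0_INR; lia).
  assert (/ INR (S k) <= 1).
  { rewrite S_INR. pose proof (pos_INR k). rewrite <- Rinv_1. apply Rinv_le_contravar; lra. }
  pose proof (pow_le (Cmod w) (S k) (Cmod_ge_0 w)). nra.
Qed.

Lemma log1m_is_cderive w : Cmod w < 1 -> ex_series (fun k => log1m_term k w) /\ is_cderive log1m w (CSeries (cpown w)).
Proof.
  intros Hw.
  assert (Hex : forall y, Cmod y < 1 -> ex_series (fun k => log1m_term k y)).
  { intros y Hy. apply (ex_series_le (K:=C_AbsRing) (V:=C_CompleteNormedModule) _ (fun k => Cmod y ^ k)).
    intros k. change (Cmod (log1m_term k y) <= Cmod y ^ k). eapply Rle_trans. apply Cmod_log1m_term.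
    simpl. pose proof (pow_le (Cmod y) k (Cmod_ge_0 y)). pose proof (Cmod_ge_0 y).
    assert (Cmod y ^ k * Cmod y <= Cmod y ^ k * 1) by (apply Rmult_le_compat_l; lra). lra.
    exists (/ (1 - Cmod y)). apply is_series_geom. rewrite Rabs_pos_eq by apply Cmod_ge_0; auto. }
  split; auto.
  set (del := (1 - Cmod w) / 2).
  assert (Hdel : 0 < del) by (unfold del; lra).
  set (r := Cmod w + del).
  assert (Hball : forall y, Cmod (y - w) < del -> Cmod y < r).
  { intros y Hy. pose proof (Cmod_triangle (y - w) w). replace (y - w + w)%C with y in H by cring. unfold r; lra. }
  apply (is_cderive_CSeries log1m_term (fun k y => cpown y k) (fun k => r ^ k) w del Hdel).
  - intros n y Hy. unfold log1m_term. pose proof (is_cderive_scal (RtoC (/ INR (S n))) _ _ _ (is_cderive_cpown n y)) as H.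
    eapply is_cderive_eq_deriv; [|exact H]. rewrite Cmult_assoc, <- RtoC_mult, Rinv_l.
    cring. apply not_0_INR; lia.
  - intros n y Hy. rewrite Cmod_cpown. apply pow_incr. split. apply Cmod_ge_0. left; apply Hball; auto.
  - exists (/ (1 - r)). apply is_series_geom. rewrite Rabs_pos_eq; unfold r, del in *.
    lra. pose proof (Cmod_ge_0 w); lra.
  - intros y Hy. apply Hex. pose proof (Hball y Hy). unfold r, del in *. lra.
Qed.

Lemma log1m_0 : log1m (RtoC 0) = RtoC 0.
Proof.
  unfold log1m. apply CSeries_unique. apply eps_is_series_C. intros eps. exists O. intros n _.
  assert (E : sum_n (fun k => log1m_term k (RtoC 0)) n = RtoC 0).
  { induction n. rewrite sum_O. unfold log1m_term. simpl. cring.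
    rewrite sum_Sn, IHn. unfold log1m_term. simpl. cring. }
  rewrite E. replace (RtoC 0 - RtoC 0)%C with (RtoC 0) by cring. rewrite Cmod_0. apply cond_pos.
Qed.

Lemma cexp_log1m_mult w : Cmod w < 1 -> (cexp (log1m w) * (RtoC 1 - w))%C = RtoC 1.
Proof.
  intros Hw.
  set (Phi := fun y => ((RtoC 1 - y) * cexp (log1m y))%C).
  assert (HD : forall y, Cmod (y - RtoC 0) < 1 -> is_cderive Phi y (RtoC 0)).
  { intros y Hy. replace (y - RtoC 0)%C with y in Hy by cring.
    destruct (log1m_is_cderive y Hy) as [_ H].
    assert (Hg := is_series_cpown y Hy). rewrite (CSeries_unique _ _ Hg) in H.
    unfold Phi. eapply is_cderive_eq_deriv; [|apply is_cderive_mult; [apply is_cderive_minus; [apply is_cderive_const|apply is_cderive_id]|apply is_cderive_cexp_comp; exact H]].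
    replace ((RtoC 1 - y) * (/ (RtoC 1 - y) * cexp (log1m y)))%C with
      (((RtoC 1 - y) * / (RtoC 1 - y)) * cexp (log1m y))%C by cring.
    rewrite Cinv_r by (apply one_minus_neq0; auto). cring. }
  pose proof (cmean_value_ball Phi (fun _ => RtoC 0) 0 (RtoC 0) 1 w HD) as H.
  assert (Hw' : Cmod (w - RtoC 0) < 1) by (replace (w - RtoC 0)%C with w by cring; auto).
  specialize (H ltac:(intros; cbv beta; rewrite Cmod_0; lra) Hw').
  rewrite Rmult_0_l in H.
  assert (E : (Phi w - Phi (RtoC 0))%C = RtoC 0).
  { apply Cmod_eq_0. pose proof (Cmod_ge_0 (Phi w - Phi (RtoC 0))%C). lra. }
  unfold Phi in E. rewrite log1m_0, cexp_0 in E.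
  rewrite Cmult_comm. replace (RtoC 1) with ((RtoC 1 - RtoC 0) * RtoC 1)%C at 2 by cring.
  replace ((RtoC 1 - w) * cexp (log1m w))%C with
    (((RtoC 1 - w) * cexp (log1m w) - (RtoC 1 - RtoC 0) * RtoC 1) + (RtoC 1 - RtoC 0) * RtoC 1)%C by cring.
  rewrite E. cring.
Qed.

Lemma cexp_log1m w : Cmod w < 1 -> cexp (log1m w) = (/ (RtoC 1 - w))%C.
Proof.
  intros Hw. apply (Cmult_reg_r _ _ (RtoC 1 - w)). apply one_minus_neq0; auto.
  rewrite cexp_log1m_mult by auto. rewrite Cinv_l. auto. apply one_minus_neq0; auto.
Qed.

Lemma log1m_sub_id_bound w : Cmod w < 1 -> Cmod (log1m w - w) <= Cmod w ^ 2 / (1 - Cmod w).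
Proof.
  intros Hw. destruct (log1m_is_cderive w Hw) as [Hex _].
  apply CSeries_correct in Hex. apply (is_series_tail _ _ 0) in Hex.
  rewrite sum_O in Hex. replace (log1m_term 0 w) with w in Hex by (unfold log1m_term; simpl INR; rewrite Rinv_1; cring).
  assert (G : is_series (fun k => Cmod w ^ 2 * Cmod w ^ k) (Cmod w ^ 2 / (1 - Cmod w))).
  { unfold Rdiv. apply is_series_Rscal. apply is_series_geom. rewrite Rabs_pos_eq by apply Cmod_ge_0. auto. }
  apply (is_series_Cmod_le _ _ _ _ Hex G).
  intros k. eapply Rle_trans. apply Cmod_log1m_term. rewrite <- pow_add. simpl; lra.
Qed.

Lemma inv_1m_sub_1_bound w : Cmod w < 1 -> Cmod (/ (RtoC 1 - w) - RtoC 1) <= Cmod w / (1 - Cmod w).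
Proof.
  intros Hw. assert (Hn := one_minus_neq0 w Hw).
  replace (/ (RtoC 1 - w) - RtoC 1)%C with (w / (RtoC 1 - w))%C.
  2:{ apply (Cmult_reg_r _ _ (RtoC 1 - w)); auto. unfold Cdiv.
      replace ((/ (RtoC 1 - w) - RtoC 1) * (RtoC 1 - w))%C with (/ (RtoC 1 - w) * (RtoC 1 - w) - (RtoC 1 - w))%C by cring.
      rewrite <- Cmult_assoc, !Cinv_l by auto. cring. }
  rewrite Cmod_div by auto. pose proof (Cmod_sub_lower (RtoC 1) w). rewrite Cmod_1 in H.
  unfold Rdiv. apply Rmult_le_compat_l. apply Cmod_ge_0. apply Rinv_le_contravar; lra.
Qed.

Definition euler_rem (b : nat) (s : C) : C := (log1m (cpow_neg b s) - cpow_neg b s)%C.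

Definition euler_rem_deriv (b : nat) (s : C) : C :=
  ((RtoC (- ln (INR b)) * cpow_neg b s) * (/ (RtoC 1 - cpow_neg b s) - RtoC 1))%C.

Lemma is_cderive_euler_rem b s : (2 <= b)%nat -> 0 < fst s -> is_cderive (euler_rem b) s (euler_rem_deriv b s).
Proof.
  intros Hb Hs. assert (Hw : Cmod (cpow_neg b s) < 1) by (rewrite Cmod_cpow_neg; apply rpow_neg_lt_1; auto).
  unfold euler_rem, euler_rem_deriv.
  pose proof (is_cderive_comp log1m (cpow_neg b) s _ _
    (proj2 (log1m_is_cderive _ Hw)) (is_cderive_cpow_neg b s)) as Hlog.
  rewrite (CSeries_unique _ _ (is_series_cpown _ Hw)) in Hlog.
  eapply is_cderive_eq_deriv; [|apply (is_cderive_minus _ _ _ _ _ Hlog (is_cderive_cpow_neg b s))]. cring.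
Qed.

Lemma euler_rem_bounds (b : nat) (y : C) sg : (2 <= b)%nat -> 0 < sg -> sg <= fst y ->
  Cmod (euler_rem b y) <= rpow_neg (2 * sg) b / (1 - rpow_neg sg 2) /\
  Cmod (euler_rem_deriv b y) <= ln (INR b) * rpow_neg (2 * sg) b / (1 - rpow_neg sg 2).
Proof.
  intros Hb Hsg Hy. set (w := cpow_neg b y).
  assert (H1 : Cmod w <= rpow_neg sg b) by (unfold w; rewrite Cmod_cpow_neg; apply rpow_neg_le_exponent; lia || lra).
  assert (H2 : rpow_neg sg b <= rpow_neg sg 2) by (apply rpow_neg_le_base; [lra|lia|auto]).
  assert (H3 : rpow_neg sg 2 < 1) by (apply rpow_neg_lt_1; auto).
  assert (Hw : Cmod w < 1) by lra.
  assert (H0 : 0 <= Cmod w) by apply Cmod_ge_0.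
  assert (HE : rpow_neg sg b ^ 2 = rpow_neg (2 * sg) b) by (simpl; rewrite Rmult_1_r, rpow_neg_mult; f_equal; ring).
  assert (Hq : Cmod w ^ 2 / (1 - Cmod w) <= rpow_neg (2 * sg) b / (1 - rpow_neg sg 2)).
  { rewrite <- HE. unfold Rdiv. apply Rmult_le_compat.
    - apply pow_le; auto.
    - left; apply Rinv_0_lt_compat; lra.
    - apply pow_incr; auto.
    - apply Rinv_le_contravar; lra. }
  assert (Hln : 0 <= ln (INR b)) by (apply ln_INR_ge0; lia).
  split.
  - unfold euler_rem. fold w. eapply Rle_trans; [apply log1m_sub_id_bound; auto|auto].
  - unfold euler_rem_deriv. fold w.
    rewrite !Cmod_mult, Cmod_R, Rabs_Ropp, Rabs_pos_eq by auto.
    pose proof (inv_1m_sub_1_bound _ Hw).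
    rewrite Rmult_assoc. unfold Rdiv. rewrite Rmult_assoc. apply Rmult_le_compat_l; auto.
    eapply Rle_trans; [apply Rmult_le_compat_l; [apply Cmod_ge_0|exact H]|].
    unfold Rdiv in Hq. eapply Rle_trans; [|exact Hq]. apply Req_le. unfold Rdiv. simpl. ring.
Qed.

(* The logarithm of the Euler product minus the Dirichlet series is O(|b^{-s}|^2), hence converges
   and is holomorphic beyond the abscissa of the Dirichlet series, on Re s > 1/2. *)
Lemma euler_rem_series_holo (c : nat -> nat) : (forall n, (2 <= c n)%nat) -> (forall n, (S n <= c n)%nat) ->
  (forall s, 1/2 < fst s -> ex_series (fun n => euler_rem (c n) s)) /\
  holo_on (fun s => 1/2 < fst s) (fun s => CSeries (fun n => euler_rem (c n) s)).
Proof.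
  intros Hc2 Hc.
  assert (Hscal : forall (k : R) (u : nat -> R), ex_series u -> ex_series (fun n => u n / k)).
  { intros k u Hu. apply (ex_series_ext (fun n => / k * u n)); [intros n; apply Rmult_comm|].
    apply (ex_series_scal (K:=R_AbsRing) (V:=R_NormedModule)), Hu. }
  assert (PW : forall s, 1/2 < fst s -> ex_series (fun n => euler_rem (c n) s)).
  { intros s Hs. apply (ex_series_le (K:=C_AbsRing) (V:=C_CompleteNormedModule) _
      (fun n => rpow_neg (2 * fst s) (c n) / (1 - rpow_neg (fst s) 2))).
    - intros n. exact (proj1 (euler_rem_bounds (c n) s (fst s) (Hc2 n) ltac:(lra) ltac:(lra))).
    - apply Hscal, (ex_series_rpow_neg_linear c Hc); lra. }
  split; auto.
  intros s Hs. set (del := (fst s - 1/2) / 2). set (sg := fst s - del).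
  eexists. apply (is_cderive_CSeries (fun n => euler_rem (c n)) (fun n => euler_rem_deriv (c n))
    (fun n => ln (INR (c n)) * rpow_neg (2 * sg) (c n) / (1 - rpow_neg sg 2)) s del).
  - unfold del; lra.
  - intros n y Hy. apply is_cderive_euler_rem; [apply Hc2|]. pose proof (Re_ball_lower y s). unfold del in *; lra.
  - intros n y Hy. pose proof (Re_ball_lower y s).
    exact (proj2 (euler_rem_bounds (c n) y sg (Hc2 n) ltac:(unfold sg, del; lra) ltac:(unfold sg; lra))).
  - apply Hscal, (ex_series_rpow_neg_linear c Hc). unfold sg, del; lra.
  - intros y Hy. apply PW. pose proof (Re_ball_lower y s). unfold del in *; lra.
Qed.

Lemma zeta_partial_exp (a : nat -> nat) s N :
  (forall m, Cmod (cpow_neg (a (S m)) s) < 1) ->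
  zeta_partial a s N = cexp (csum N (fun m => log1m (cpow_neg (a (S m)) s))).
Proof.
  intros H. induction N.
  - simpl. rewrite cexp_0. reflexivity.
  - simpl. rewrite IHN, cexp_plus, cexp_log1m by auto. reflexivity.
Qed.

Lemma zeta_value_cexp (a : nat -> nat) s E :
  (forall m, Cmod (cpow_neg (a (S m)) s) < 1) ->
  is_series (fun m => log1m (cpow_neg (a (S m)) s)) E -> zeta_value a s (cexp E).
Proof.
  intros Hw HE. unfold zeta_value.
  apply (proj2 (filterlim_locally_ball_norm (K:=C_AbsRing) (U:=C_NormedModule) (F:=eventually) _ _)).
  intros eps. destruct (is_cderive_continuous cexp _ _ (is_cderive_cexp E) eps (cond_pos eps)) as [d [Hd Hc]].
  destruct (is_series_C_eps _ _ HE (mkposreal _ Hd)) as [N HN].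
  exists (S N). intros [|n] Hn; [lia|]. unfold ball_norm.
  change (Cmod (zeta_partial a s (S n) - cexp E) < eps).
  rewrite zeta_partial_exp, <- sum_n_csum by auto. apply Hc, HN. lia.
Qed.

(** * Quadratic growth from the theta-function bound *)

Lemma sum_n_le_series (a : nat -> R) l N : is_series a l -> (forall n, 0 <= a n) -> sum_n a N <= l.
Proof.
  intros H Hp. apply Rnot_lt_le. intros Hlt.
  assert (He : 0 < (sum_n a N - l) / 2) by lra.
  destruct (is_series_R_eps _ _ H (mkposreal _ He)) as [M HM]. specialize (HM (max M N) ltac:(lia)). simpl in HM.
  assert (sum_n a N <= sum_n a (max M N)).
  { assert (forall k, sum_n a N <= sum_n a (N + k)).
    { induction k. rewrite Nat.add_0_r. lra. rewrite Nat.add_succ_r, sum_Sn. change plus with Rplus.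
      simpl. specialize (Hp (S (N + k))). lra. }
    replace (max M N) with (N + (max M N - N))%nat by lia. apply H0. }
  unfold Rabs in HM. destruct (Rcase_abs _); lra.
Qed.

Lemma sum_n_const_le (a : nat -> R) c n : (forall m, (m <= n)%nat -> c <= a m) -> INR (S n) * c <= sum_n a n.
Proof.
  induction n; intros H.
  - rewrite sum_O. simpl. specialize (H O ltac:(lia)). lra.
  - rewrite sum_Sn. change plus with Rplus. rewrite S_INR.
    specialize (IHn ltac:(intros; apply H; lia)). specialize (H (S n) ltac:(lia)). simpl in *. lra.
Qed.

(* At t = 1 / a'_{n+1} the first n + 1 terms are at least e^{-1}, so (n + 1) / e <= C sqrt a'_{n+1}. *)
Lemma theta_majorant_quadratic_growth (a' : nat -> nat) : strictly_increasing_pos a' -> (1 <= a' 1)%nat ->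
  (exists Cst : R, 0 < Cst /\ exists delta : R, 0 < delta /\
     forall t : R, 0 < t < delta ->
       exists l : R, is_series (fun m => exp (- INR (a' (S m)) * t)) l /\ l <= Cst / sqrt t) ->
  exists kap N0, 0 < kap /\ forall n, (N0 <= n)%nat -> kap * INR (S n) ^ 2 <= INR (a' (S n)).
Proof.
  intros Hs H1 [Cst [HC [del [Hd Hmaj]]]].
  destruct (archimed_cor1 del Hd) as [N0 [HN0 HN0']].
  exists (exp (-1) ^ 2 / Cst ^ 2), N0. split.
  { apply Rdiv_lt_0_compat. apply pow_lt, exp_pos. apply pow_lt; auto. }
  intros n Hn.
  set (x := INR (a' (S n))).
  assert (Hx : INR (S n) <= x) by (apply le_INR, incr_ge_index; auto; lia).
  assert (HN0pos : 0 < INR N0) by (apply lt_0_INR; lia).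
  assert (HxN : INR N0 <= x) by (apply Rle_trans with (INR (S n)); auto; apply le_INR; lia).
  assert (Hxp : 0 < x) by lra.
  destruct (Hmaj (/ x)) as [l [Hl Hle]].
  { split. apply Rinv_0_lt_compat; auto. apply Rle_lt_trans with (/ INR N0); auto.
    apply Rinv_le_contravar; auto. }
  assert (Hsum : INR (S n) * exp (-1) <= l).
  { eapply Rle_trans; [|apply (sum_n_le_series _ _ n Hl)].
    apply sum_n_const_le. intros m Hm. apply exp_le.
    assert (INR (a' (S m)) <= x) by (apply le_INR; pose proof (incr_add_le a' Hs (S m) (S n) ltac:(lia) ltac:(lia)); lia).
    assert (0 <= INR (a' (S m))) by apply pos_INR.
    apply Rmult_le_compat_r with (r := / x) in H; [|left; apply Rinv_0_lt_compat; auto].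
    rewrite Rinv_r in H by lra. lra.
    intros; left; apply exp_pos. }
  rewrite sqrt_inv in Hle. unfold Rdiv in Hle. rewrite Rinv_inv in Hle.
  assert (Hsq : 0 < sqrt x) by (apply sqrt_lt_R0; auto).
  assert (HA : INR (S n) * exp (-1) <= Cst * sqrt x) by lra.
  assert (HB : 0 <= INR (S n) * exp (-1)) by (apply Rmult_le_pos; [apply pos_INR|left; apply exp_pos]).
  assert (HC2 : (INR (S n) * exp (-1)) ^ 2 <= (Cst * sqrt x) ^ 2) by (apply pow_incr; auto).
  rewrite Rpow_mult_distr, (Rpow_mult_distr Cst) in HC2.
  replace (sqrt x ^ 2) with x in HC2 by (simpl; rewrite Rmult_1_r, sqrt_sqrt; lra).
  unfold Rdiv. rewrite Rmult_comm, <- Rmult_assoc.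
  apply Rmult_le_reg_l with (Cst ^ 2). apply pow_lt; auto.
  replace (Cst ^ 2 * (INR (S n) ^ 2 * exp (-1) ^ 2 * / Cst ^ 2)) with (INR (S n) ^ 2 * exp (-1) ^ 2)
    by (field; lra).
  lra.
Qed.

(** * Rearranging Dirichlet series *)

Definition indicator (b : nat -> nat) (f : nat -> C) (x : nat) : C :=
  if excluded_middle_informative (in_seq b x) then f x else RtoC 0.

Section IndicatorSeries.
Variable b : nat -> nat.
Variable f : nat -> C.
Hypothesis Hb : strictly_increasing_pos b.
Let g m := f (b (S m)).

Lemma indicator_in x : in_seq b x -> indicator b f x = f x.
Proof. intros H. unfold indicator. destruct (excluded_middle_informative _); tauto. Qed.
Lemma indicator_out x : ~ in_seq b x -> indicator b f x = RtoC 0.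
Proof. intros H. unfold indicator. destruct (excluded_middle_informative _); tauto. Qed.

Lemma indicator_sum_before X : (X < b 1)%nat -> sum_n (indicator b f) X = RtoC 0.
Proof.
  induction X; intros H.
  - rewrite sum_O. apply indicator_out. intros [k [Hk E]]. pose proof (incr_add_le b Hb 1 k ltac:(lia) Hk). lia.
  - rewrite sum_Sn, IHX by lia. rewrite indicator_out. change plus with Cplus. cring.
    intros [k [Hk E]]. pose proof (incr_add_le b Hb 1 k ltac:(lia) Hk). lia.
Qed.

Lemma indicator_sum_n X : (b 1 <= X)%nat ->
  exists N, (b (S N) <= X < b (S (S N)))%nat /\ sum_n (indicator b f) X = sum_n g N.
Proof.
  induction X; intros H.
  - exists O. pose proof (Hb 1%nat ltac:(lia)). split. lia.
    rewrite !sum_O. unfold g. rewrite indicator_in. f_equal. lia. exists 1%nat. split; lia.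
  - destruct (Nat.eq_dec (b 1) (S X)) as [E|E].
    + exists O. pose proof (Hb 1%nat ltac:(lia)). split. lia.
      rewrite sum_Sn, indicator_sum_before by lia. rewrite sum_O. unfold g. rewrite indicator_in.
      change plus with Cplus. rewrite E. cring. exists 1%nat; split; lia.
    + destruct (IHX ltac:(lia)) as [N [[HN1 HN2] HS]].
      destruct (Nat.eq_dec (S X) (b (S (S N)))) as [E2|E2].
      * exists (S N). pose proof (Hb (S (S N)) ltac:(lia)). split. lia.
        rewrite sum_Sn, HS, (sum_Sn g N). f_equal. unfold g. rewrite E2. apply indicator_in.
        exists (S (S N)); split; lia.
      * exists N. split. lia. rewrite sum_Sn, HS. rewrite indicator_out. change plus with Cplus. cring.
        intros [k [Hk Ek]].
        assert (b (S N) < b k)%nat by lia. assert (b k < b (S (S N)))%nat by lia.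
        apply (incr_lt_inv b Hb) in H0; try lia. apply (incr_lt_inv b Hb) in H1; try lia.
Qed.

Lemma is_series_indicator l : is_series g l -> is_series (indicator b f) l.
Proof.
  intros H. apply eps_is_series_C. intros eps. destruct (is_series_C_eps _ _ H eps) as [N0 HN0].
  exists (b (S N0)). intros X HX.
  assert (b 1 <= X)%nat by (pose proof (incr_add_le b Hb 1 (S N0) ltac:(lia) ltac:(lia)); lia).
  destruct (indicator_sum_n X H0) as [N [[H1 H2] H3]]. rewrite H3. apply HN0.
  assert (b (S N0) < b (S (S N)))%nat by lia. apply (incr_lt_inv b Hb) in H4; lia.
Qed.

Lemma is_series_of_indicator l : is_series (indicator b f) l -> is_series g l.
Proof.
  intros H. apply eps_is_series_C. intros eps. destruct (is_series_C_eps _ _ H eps) as [N0 HN0].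
  exists N0. intros n Hn.
  assert (Hge : (b 1 <= b (S n))%nat) by (pose proof (incr_add_le b Hb 1 (S n) ltac:(lia) ltac:(lia)); lia).
  destruct (indicator_sum_n (b (S n)) Hge) as [N [[H1 H2] H3]].
  assert (N = n).
  { destruct (Nat.lt_total N n) as [L|[L|L]]; auto.
    - pose proof (incr_add_le b Hb (S (S N)) (S n) ltac:(lia) ltac:(lia)). lia.
    - pose proof (incr_add_le b Hb (S n) (S N) ltac:(lia) ltac:(lia)). pose proof (Hb (S n) ltac:(lia)).
      pose proof (incr_add_le b Hb (S (S n)) (S N) ltac:(lia) ltac:(lia)). lia. }
  subst N. rewrite <- H3. apply HN0.
  pose proof (incr_add_le b Hb 1 (S n) ltac:(lia) ltac:(lia)). lia.
Qed.
End IndicatorSeries.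

Lemma is_series_partition (f : nat -> C) (a b c : nat -> nat) lb lc :
  strictly_increasing_pos a -> strictly_increasing_pos b -> strictly_increasing_pos c ->
  (forall x, in_seq b x -> in_seq a x) -> (forall x, in_seq c x <-> in_seq a x /\ ~ in_seq b x) ->
  is_series (fun n => f (b (S n))) lb -> is_series (fun n => f (c (S n))) lc ->
  is_series (fun n => f (a (S n))) (lb + lc)%C.
Proof.
  intros Ha Hb Hc Hba Hca Hlb Hlc. apply (is_series_of_indicator a f Ha).
  apply (is_series_ext (fun x => indicator b f x + indicator c f x)%C).
  - intros x. unfold indicator.
    destruct (excluded_middle_informative (in_seq b x)) as [X1|X1];
      destruct (excluded_middle_informative (in_seq c x)) as [X2|X2];
      destruct (excluded_middle_informative (in_seq a x)) as [X3|X3];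
      try (exfalso; apply X3; auto; fail); try (apply Hca in X2; tauto);
      try (exfalso; apply X2, Hca; tauto); cring.
  - apply is_series_Cplus; [apply (is_series_indicator b f Hb)|apply (is_series_indicator c f Hc)]; auto.
Qed.

Lemma csum_blocks (g : nat -> C) Q P N : (1 <= Q)%nat ->
  csum (Q * (N + 2) + P - 1) (fun k => g (S k)) =
  (csum (Q + P - 1) (fun k => g (S k)) + csum (S N) (fun n => csum Q (fun r => g (Q * S n + P + r)%nat)))%C.
Proof.
  intros HQ. induction N.
  - replace (Q * (0 + 2) + P - 1)%nat with ((Q + P - 1) + Q)%nat by lia.
    rewrite csum_add. f_equal. simpl. rewrite (csum_ext Q _ (fun r => g (Q * 1 + P + r)%nat)).
    generalize (csum Q (fun r => g (Q * 1 + P + r)%nat)). intros; cring.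
    intros k Hk. f_equal. lia.
  - replace (Q * (S N + 2) + P - 1)%nat with ((Q * (N + 2) + P - 1) + Q)%nat by lia.
    rewrite csum_add, IHN. change (csum (S (S N)) ?F) with (csum (S N) F + F (S N))%C.
    rewrite (csum_ext Q _ (fun r => g (Q * S (S N) + P + r)%nat)).
    generalize (csum (Q + P - 1) (fun k => g (S k))) (csum (S N) (fun n => csum Q (fun r => g (Q * S n + P + r)%nat)))
      (csum Q (fun r => g (Q * S (S N) + P + r)%nat)). intros; cring.
    intros k Hk. f_equal. lia.
Qed.

(* The terms g 1, ..., g (Q + P - 1) precede the first block; block n consists of the indices
   Q (n + 1) + P + r with r < Q. *)
Lemma series_residue_classes (g : nat -> C) Q P D L : (1 <= Q)%nat ->
  is_series (fun m => g (S m)) D ->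
  (forall r, (r < Q)%nat -> is_series (fun n => g (Q * S n + P + r)%nat) (L r)) ->
  D = (csum (Q + P - 1) (fun k => g (S k)) + csum Q L)%C.
Proof.
  intros HQ HD HL.
  set (h := fun n => csum Q (fun r => g (Q * S n + P + r)%nat)).
  assert (H1 : is_series h (csum Q L)).
  { apply (is_series_csum Q (fun r n => g (Q * S n + P + r)%nat)). auto. }
  assert (H2 : is_series h (D - csum (Q + P - 1) (fun k => g (S k)))%C).
  { apply eps_is_series_C. intros eps. destruct (is_series_C_eps _ _ HD eps) as [N0 HN0].
    exists N0. intros n Hn.
    assert (E : (sum_n h n - (D - csum (Q + P - 1) (fun k => g (S k))))%C =
                (sum_n (fun m => g (S m)) (Q * (n + 2) + P - 2) - D)%C).
    { rewrite !sum_n_csum. replace (S (Q * (n + 2) + P - 2)) with (Q * (n + 2) + P - 1)%nat by lia.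
      rewrite csum_blocks by auto. unfold h. generalize (csum (Q + P - 1) (fun k => g (S k))). intros; cring. }
    rewrite E. apply HN0. nia. }
  pose proof (is_series_C_unique _ _ _ H1 H2). rewrite H. cring.
Qed.

(** * The continuation of log zeta_A *)

Section LogZetaContinuation.
Variables (a a' at_ : nat -> nat) (Q P : nat) (G : C -> C) (U : C -> Prop) (kap : R) (N0 : nat).
Hypothesis Ha : strictly_increasing_pos a.
Hypothesis Ha2 : forall k, (1 <= k)%nat -> (2 <= a k)%nat.
Hypothesis Ha' : strictly_increasing_pos a'.
Hypothesis Ha'_sub : forall x, in_seq a' x -> in_seq a x.
Hypothesis Hkap : 0 < kap.
Hypothesis Ha'_quad : forall n, (N0 <= n)%nat -> kap * INR (S n) ^ 2 <= INR (a' (S n)).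
Hypothesis Hat : strictly_increasing_pos at_.
Hypothesis Hat_diff : forall x, in_seq at_ x <-> in_seq a x /\ ~ in_seq a' x.
Hypothesis HQ : (1 <= Q)%nat.
Hypothesis HG : holomorphic_on U G.
Hypothesis HG_series : forall s, U s -> 1 < Re s ->
  is_series (fun m => cpow_neg (at_ (Q * S m + P)%nat) s) (G s).

Definition residue_gap r (s : C) : C :=
  CSeries (fun n => gap_term (fun n => at_ (Q * S n + P)%nat) (fun n => at_ (Q * S n + P + r)%nat) n s).

Definition log_zeta (s : C) : C :=
  (dirichlet a' s + csum (Q + P - 1) (fun k => cpow_neg (at_ (S k)) s) + RtoC (INR Q) * G s
   + csum Q (fun r => residue_gap r s) + CSeries (fun n => euler_rem (a (S n)) s))%C.

Lemma a'_ge_2 k : (1 <= k)%nat -> (2 <= a' k)%nat.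
Proof. apply (in_seq_ge_2 a); auto; apply Ha2; lia. Qed.

Lemma at_ge_2 k : (1 <= k)%nat -> (2 <= at_ k)%nat.
Proof. apply (in_seq_ge_2 a); [auto|apply Ha2; lia|intros x Hx; apply Hat_diff in Hx; tauto]. Qed.

Lemma residue_gap_interlaced r : (r < Q)%nat -> forall n,
  (1 <= at_ (Q * S n + P))%nat /\ (at_ (Q * S n + P) <= at_ (Q * S n + P + r))%nat /\
  (at_ (Q * S n + P + r) <= at_ (Q * S (S n) + P))%nat.
Proof.
  intros Hr n. split; [|split].
  - pose proof (at_ge_2 (Q * S n + P) ltac:(nia)). lia.
  - pose proof (incr_add_le at_ Hat (Q * S n + P) (Q * S n + P + r) ltac:(nia) ltac:(lia)). lia.
  - pose proof (incr_add_le at_ Hat (Q * S n + P + r) (Q * S (S n) + P) ltac:(nia) ltac:(nia)). lia.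
Qed.

Lemma dirichlet_a'_holo :
  (forall s, 1/2 < fst s -> ex_series (fun n => cpow_neg (a' (S n)) s)) /\
  holo_on (fun s => 1/2 < fst s) (dirichlet a').
Proof.
  assert (Hc : forall n, (1 <= a' (S n))%nat) by (intros n; pose proof (a'_ge_2 (S n)); lia).
  pose proof (ex_series_rpow_neg_quadratic (fun n => a' (S n)) kap N0 Hkap Hc Ha'_quad) as Hq.
  apply (dirichlet_series_holo _ (1/2)); [lra|auto|intros; apply Hq; auto..].
Qed.

Lemma ex_dirichlet_at s : 1 < fst s -> ex_series (fun n => cpow_neg (at_ (S n)) s).
Proof.
  assert (Hc : forall n, (1 <= at_ (S n))%nat) by (intros n; pose proof (at_ge_2 (S n)); lia).
  assert (HS : forall n, (S n <= at_ (S n))%nat)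
    by (intros n; apply incr_ge_index; auto; pose proof (at_ge_2 1); lia).
  pose proof (ex_series_rpow_neg_linear _ HS) as Hl.
  apply (dirichlet_series_holo _ 1); [lra|auto|intros; apply Hl; auto..].
Qed.

Lemma euler_rem_a_holo :
  (forall s, 1/2 < fst s -> ex_series (fun n => euler_rem (a (S n)) s)) /\
  holo_on (fun s => 1/2 < fst s) (fun s => CSeries (fun n => euler_rem (a (S n)) s)).
Proof.
  apply euler_rem_series_holo; intros n; [apply Ha2; lia|].
  apply incr_ge_index; [auto|pose proof (Ha2 1); lia|lia].
Qed.

Lemma log_zeta_holo : holo_on (fun s => U s /\ 1/2 < Re s) log_zeta.
Proof.
  unfold log_zeta. repeat apply holo_on_plus.
  - apply (holo_on_subset (fun s => 1/2 < fst s)); [intros s []; auto|apply dirichlet_a'_holo].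
  - apply (holo_on_csum _ _ (fun k s => cpow_neg (at_ (S k)) s)).
    intros k _ s _. eexists; apply is_cderive_cpow_neg.
  - apply holo_on_scal, (holo_on_subset U); [intros s []; auto|]. apply holo_on_holomorphic_on, HG.
  - apply (holo_on_csum _ _ residue_gap). intros r Hr.
    apply (holo_on_subset (fun s => 0 < fst s)); [intros s [_ Hs]; unfold Re in Hs; lra|].
    apply (gap_series_holo _ _ (residue_gap_interlaced r Hr)).
  - apply (holo_on_subset (fun s => 1/2 < fst s)); [intros s []; auto|apply euler_rem_a_holo].
Qed.

Lemma dirichlet_at_residue s : U s -> 1 < Re s ->
  dirichlet at_ s = (csum (Q + P - 1) (fun k => cpow_neg (at_ (S k)) s)
                     + (RtoC (INR Q) * G s + csum Q (fun r => residue_gap r s)))%C.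
Proof.
  intros Hs Hs1. unfold Re in Hs1. unfold dirichlet.
  rewrite (series_residue_classes (fun k => cpow_neg (at_ k) s) Q P _
    (fun r => G s + residue_gap r s)%C HQ (CSeries_correct _ (ex_dirichlet_at s Hs1))).
  { rewrite csum_plus, csum_const. reflexivity. }
  intros r Hr.
  apply (is_series_ext (fun n => cpow_neg (at_ (Q * S n + P)%nat) s
    + gap_term (fun n => at_ (Q * S n + P)%nat) (fun n => at_ (Q * S n + P + r)%nat) n s)%C).
  { intros n. unfold gap_term. cring. }
  apply is_series_Cplus; [apply HG_series; auto|].
  apply CSeries_correct, (gap_series_holo _ _ (residue_gap_interlaced r Hr)). lra.
Qed.

Lemma log_zeta_series s : U s -> 1 < Re s ->
  is_series (fun m => log1m (cpow_neg (a (S m)) s)) (log_zeta s).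
Proof.
  intros Hs Hs1.
  assert (HA : is_series (fun m => cpow_neg (a (S m)) s) (dirichlet a' s + dirichlet at_ s)%C).
  { apply (is_series_partition (fun x => cpow_neg x s) a a' at_); auto;
      apply CSeries_correct; [apply dirichlet_a'_holo|apply ex_dirichlet_at]; unfold Re in Hs1; lra. }
  apply (is_series_ext (fun m => cpow_neg (a (S m)) s + euler_rem (a (S m)) s)%C).
  { intros m. unfold euler_rem. cring. }
  replace (log_zeta s) with ((dirichlet a' s + dirichlet at_ s)
    + CSeries (fun n => euler_rem (a (S n)) s))%C
    by (rewrite dirichlet_at_residue by auto; unfold log_zeta; cring).
  apply is_series_Cplus; auto.
  apply CSeries_correct, euler_rem_a_holo. unfold Re in Hs1. lra.
Qed.

End LogZetaContinuation.

Theorem proposition2p2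
  (a a' at_ : nat -> nat) (i j : nat) (U : C -> Prop) (G : C -> C) :
  (* A = {a_n}, integers >= 2, increasing *)
  strictly_increasing_pos a ->
  (2 <= a 1)%nat ->
  (* A' = {a'_n} subset of A *)
  strictly_increasing_pos a' ->
  (forall x, in_seq a' x -> in_seq a x) ->
  (* sum_n e^{-a'_n t} is majorized by t^{-1/2} as t -> 0+ *)
  (exists Cst : R, 0 < Cst /\ exists delta : R, 0 < delta /\
     forall t : R, 0 < t < delta ->
       exists l : R, is_series (fun m => exp (- INR (a' (S m)) * t)) l /\
                     l <= Cst / sqrt t) ->
  (* \tilde A = A \ A', listed increasingly *)
  strictly_increasing_pos at_ ->
  (forall x, in_seq at_ x <-> (in_seq a x /\ ~ in_seq a' x)) ->
  (* D_{ {\tilde a_{2^i n + j}} } admits a holomorphic continuation G to the domain U *)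
  is_domain U ->
  (exists s, U s /\ 1 < Re s) ->
  holomorphic_on U G ->
  (forall s, U s -> 1 < Re s ->
     is_series (fun m => cpow_neg (at_ (2 ^ i * S m + j)%nat) s) (G s)) ->
  (* then the continuation of zeta_A to U ∩ {Re s > 1/2} exists and does not vanish *)
  exists F : C -> C,
    holomorphic_on (fun s => U s /\ 1/2 < Re s) F /\
    (forall s, U s -> 1 < Re s -> zeta_value a s (F s)) /\
    (forall s, U s -> 1/2 < Re s -> F s <> RtoC 0).
Proof.
  (* The continuation is an explicit formula. *)
  intros Ha Ha1 Ha' Hsub Hmaj Hat Hdiff _ _ HG HGs.
  assert (Ha2 : forall k, (1 <= k)%nat -> (2 <= a k)%nat)
    by (apply (in_seq_ge_2 a a); auto).
  assert (HQ : (1 <= 2 ^ i)%nat) by (pose proof (Nat.pow_nonzero 2 i ltac:(lia)); lia).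
  destruct (theta_majorant_quadratic_growth a' Ha' ltac:(pose proof (in_seq_ge_2 a a' Ha Ha1 Hsub 1); lia) Hmaj)
    as [kap [N0 [Hkap Hq]]].
  exists (fun s => cexp (log_zeta a a' at_ (2 ^ i) j G s)). split; [|split].
  - apply holomorphic_on_holo_on, holo_on_cexp, (log_zeta_holo _ _ _ _ _ _ U kap N0); auto.
  - intros s Hs Hs1. apply zeta_value_cexp.
    + intros m. rewrite Cmod_cpow_neg. apply rpow_neg_lt_1; [apply Ha2; lia|unfold Re in Hs1; lra].
    + apply (log_zeta_series _ _ _ _ _ _ U kap N0); auto.
  - intros s _ _. apply cexp_neq0.
Qed.
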